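(* Let $\kappa$ be an infinite cardinal and let $(\kappa^{\aleph_0},\mathcal U)$ be the countable power of the discrete uniform space of cardinality $\kappa$ (with the product uniformity). Then: (1) the completion $\widehat{F^b_{NA}}(\kappa^{\aleph_0},\mathcal U)$ is surjectively universal in the class of all balanced non-archimedean metrizable complete topological groups of weight $\le\kappa$; (2) the completion $\widehat{A_{NA}}(\kappa^{\aleph_0},\mathcal U)$ is surjectively universal in the class of all abelian non-archimedean metrizable complete topological groups of weight $\le\kappa$; (3) the completion $\widehat{B_{NA}}(\kappa^{\aleph_0},\mathcal U)$ is surjectively universal in the class of all Boolean non-archimedean metrizable complete topological groups of weight $\le\kappa$.
   Context: All groups are Hausdorff. A topological group is non-archimedean if it has a local base at the identity of open subgroups; balanced if its left and right uniformities coincide; Boolean if every non-identity element has order 2; complete if it is complete in its two-sided uniformity, and $\widehat G$ denotes the completion in the two-sided uniformity. For a class $\Omega$ of topological groups and a uniform space $(X,\mathcal U)$, $F_\Omega(X,\mathcal U)$ denotes the group $F\in\Omega$ together with a uniformly continuous $i\colon X\to F$ (two-sided uniformity) such that every uniformly continuous map from $X$ to a group in $\Omega$ factors uniquely as a continuous homomorphism composed with $i$. $F^b_{NA}$, $A_{NA}$, $B_{NA}$ are these for $\Omega$ = balanced, abelian, Boolean non-archimedean groups respectively. A group $G$ is surjectively universal in a class $\Omega$ if $G\in\Omega$ and every $H\in\Omega$ is topologically isomorphic to a topological quotient group of $G$. *)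

From Stdlib Require Import Reals List.
Open Scope R_scope.

Set Implicit Arguments.

Record TopGroup := {
  carrier :> Type;
  gmul : carrier -> carrier -> carrier;
  ginv : carrier -> carrier;
  gone : carrier;
  gopen : (carrier -> Prop) -> Prop
}.

Arguments gmul {t}.
Arguments ginv {t}.
Arguments gone {t}.
Arguments gopen {t}.

Section TG.
Variable G : TopGroup.
Local Notation "x * y" := (gmul x y).
Local Notation "x ^-1" := (ginv x) (at level 3).
Local Notation e := (@gone G).

Definition is_group : Prop :=
  (forall x y z : G, x * (y * z) = (x * y) * z) /\
  (forall x : G, e * x = x /\ x * e = x) /\
  (forall x : G, x^-1 * x = e /\ x * x^-1 = e).

Definition is_topology : Prop :=
  gopen (fun _ : G => True) /\
  (forall U V : G -> Prop, gopen U -> gopen V -> gopen (fun x => U x /\ V x)) /\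
  (forall (I : Type) (U : I -> G -> Prop), (forall i, gopen (U i)) ->
     gopen (fun x => exists i, U i x)).

Definition hausdorff : Prop :=
  forall x y : G, x <> y -> exists U V : G -> Prop,
    gopen U /\ gopen V /\ U x /\ V y /\ forall z, U z -> V z -> False.

Definition mul_continuous : Prop :=
  forall (W : G -> Prop) (x y : G), gopen W -> W (x * y) ->
    exists U V : G -> Prop, gopen U /\ gopen V /\ U x /\ V y /\
      forall a b, U a -> V b -> W (a * b).

Definition inv_continuous : Prop :=
  forall W : G -> Prop, gopen W -> gopen (fun x => W (x^-1)).

Definition is_topgroup : Prop :=
  is_group /\ is_topology /\ hausdorff /\ mul_continuous /\ inv_continuous.

Definition nbhd_e (N : G -> Prop) : Prop :=
  exists U, gopen U /\ U e /\ forall x, U x -> N x.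

Definition is_subgroup (H : G -> Prop) : Prop :=
  H e /\ (forall x y, H x -> H y -> H (x * y)) /\ (forall x, H x -> H (x^-1)).

Definition non_archimedean : Prop :=
  forall N, nbhd_e N -> exists H, gopen H /\ is_subgroup H /\ forall x, H x -> N x.

Definition ent_left (V : G -> Prop) (x y : G) : Prop := V (x^-1 * y).
Definition ent_right (V : G -> Prop) (x y : G) : Prop := V (y * x^-1).
Definition ent_two (V : G -> Prop) (x y : G) : Prop := ent_left V x y /\ ent_right V x y.

Definition balanced : Prop :=
  (forall V, nbhd_e V -> exists W, nbhd_e W /\
      forall x y, ent_left W x y -> ent_right V x y) /\
  (forall V, nbhd_e V -> exists W, nbhd_e W /\
      forall x y, ent_right W x y -> ent_left V x y).

Definition abelian : Prop := forall x y : G, x * y = y * x.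

Definition boolean : Prop := forall x : G, x <> e -> x * x = e.

Definition metrizable : Prop :=
  exists d : G -> G -> R,
    (forall x y, 0 <= d x y) /\ (forall x y, d x y = 0 <-> x = y) /\
    (forall x y, d x y = d y x) /\ (forall x y z, d x z <= d x y + d y z) /\
    (forall U, gopen U <-> forall x, U x -> exists eps, 0 < eps /\
        forall y, d x y < eps -> U y).

Definition proper_filter (F : (G -> Prop) -> Prop) : Prop :=
  F (fun _ => True) /\ ~ F (fun _ => False) /\
  (forall A B, F A -> F B -> F (fun x => A x /\ B x)) /\
  (forall A B : G -> Prop, (forall x, A x -> B x) -> F A -> F B).

Definition cauchy_filter (F : (G -> Prop) -> Prop) : Prop :=
  forall V, nbhd_e V -> exists A, F A /\ forall x y, A x -> A y -> ent_two V x y.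

Definition filter_converges (F : (G -> Prop) -> Prop) (x : G) : Prop :=
  forall U, gopen U -> U x -> F U.

Definition complete : Prop :=
  forall F, proper_filter F -> cauchy_filter F -> exists x, filter_converges F x.

Definition weight_le (K : Type) : Prop :=
  exists B : K -> G -> Prop, (forall k, gopen (B k)) /\
    forall U x, gopen U -> U x -> exists k, B k x /\ forall y, B k y -> U y.

End TG.

Arguments nbhd_e {G}.
Arguments is_subgroup {G}.
Arguments ent_left {G}.
Arguments ent_right {G}.
Arguments ent_two {G}.
Arguments proper_filter {G}.
Arguments cauchy_filter {G}.
Arguments filter_converges {G}.

Definition continuous_map {G H : TopGroup} (f : G -> H) : Prop :=
  forall W : H -> Prop, gopen W -> gopen (fun x => W (f x)).

Definition open_map {G H : TopGroup} (f : G -> H) : Prop :=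
  forall U : G -> Prop, gopen U -> gopen (fun y => exists x, U x /\ f x = y).

Definition homomorphism {G H : TopGroup} (f : G -> H) : Prop :=
  forall x y : G, f (gmul x y) = gmul (f x) (f y).

(* H is topologically isomorphic to a topological quotient group of G,
   i.e. there is an open continuous surjective homomorphism G -> H *)
Definition quotient_of (G H : TopGroup) : Prop :=
  exists f : G -> H, homomorphism f /\ continuous_map f /\ open_map f /\
    forall y, exists x, f x = y.

Definition surjectively_universal (Omega : TopGroup -> Prop) (G : TopGroup) : Prop :=
  Omega G /\ forall H, Omega H -> quotient_of G H.

(* The uniform space kappa^aleph_0 : countable power of the discrete uniform
   space K, with the product uniformity; basic entourages are
   {(x,y) | x i = y i for i < n}. *)
Definition unif_cont_from_power {K : Type} {G : TopGroup} (f : (nat -> K) -> G) : Prop :=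
  forall V, nbhd_e V -> exists n : nat, forall x y : nat -> K,
    (forall i, (i < n)%nat -> x i = y i) -> ent_two V (f x) (f y).

Definition is_free_over_power (Omega : TopGroup -> Prop) (K : Type)
    {F : TopGroup} (i : (nat -> K) -> F) : Prop :=
  Omega F /\ unif_cont_from_power i /\
  forall (H : TopGroup) (f : (nat -> K) -> H), Omega H -> unif_cont_from_power f ->
    (exists phi : F -> H, homomorphism phi /\ continuous_map phi /\
        forall x, phi (i x) = f x) /\
    (forall phi psi : F -> H, homomorphism phi -> continuous_map phi ->
        homomorphism psi -> continuous_map psi ->
        (forall x, phi (i x) = f x) -> (forall x, psi (i x) = f x) ->
        forall z, phi z = psi z).

(* (Gh, j) is the completion of G in its two-sided uniformity: Gh is a complete
   topological group and j a topological group embedding with dense image. *)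
Definition is_completion (G Gh : TopGroup) (j : G -> Gh) : Prop :=
  is_topgroup Gh /\ complete Gh /\
  homomorphism j /\ continuous_map j /\ (forall x y, j x = j y -> x = y) /\
  (forall U : G -> Prop, gopen U -> exists W : Gh -> Prop, gopen W /\
     forall x, U x <-> W (j x)) /\
  (forall W : Gh -> Prop, gopen W -> (exists z, W z) -> exists x, W (j x)).

Definition infinite_type (K : Type) : Prop := ~ exists l : list K, forall x, In x l.

Definition balanced_NA (G : TopGroup) : Prop :=
  is_topgroup G /\ non_archimedean G /\ balanced G.
Definition abelian_NA (G : TopGroup) : Prop :=
  is_topgroup G /\ non_archimedean G /\ abelian G.
Definition boolean_NA (G : TopGroup) : Prop :=
  is_topgroup G /\ non_archimedean G /\ boolean G.

Definition metr_complete_weight (K : Type) (G : TopGroup) : Prop :=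
  metrizable G /\ complete G /\ weight_le G K.

(* Let [F] be the free group of the class over the uniform space [K^nat] and [Fh]
   its completion.  The normal subgroups [near n] of [F], normally generated by the
   [i x ^-1 * i y] with [x] and [y] agreeing below [n], form a base at the identity
   (they are open by the universal property, applied to [F] retopologised by them);
   their closures form such a base of [Fh], so [Fh] is metrizable, and words in the
   [i x] with [x] of finite support are dense, which bounds the weight by [|K|]
   via Hessenberg's theorem [|K * K| = |K|].
   Conversely, a target [H] has a decreasing base of open normal subgroups [V n];
   choosing in each [V n] a [K]-indexed family dense modulo [V (n+1)], convergent
   infinite products give a uniformly continuous surjection [code : K^nat -> H].
   Its extension to [Fh] is a continuous surjective homomorphism, and it is open
   because every element of [V n] is [code x ^-1 * code y] for some [x], [y]
   agreeing below [n]. *)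

From Stdlib Require Import Classical ClassicalEpsilon FunctionalExtensionality
  PropExtensionality ProofIrrelevance Wf_nat Lia List Reals Lra.
From Stdlib Require Cantor.
From mathcomp Require boolp classical_sets.
Local Open Scope nat_scope.

(** * Cardinal arithmetic *)

Definition choose {T : Type} (t0 : T) (P : T -> Prop) : T := epsilon (inhabits t0) P.

Lemma chooseP {T : Type} (t0 : T) (P : T -> Prop) : (exists x, P x) -> P (choose t0 P).
Proof. exact (epsilon_spec (inhabits t0) P). Qed.

Lemma zorn_preorder (T : Type) (t0 : T) (R : T -> T -> Prop) :
  (forall t, R t t) -> (forall r s t, R r s -> R s t -> R r t) ->
  (forall C : T -> Prop, (forall s t, C s -> C t -> R s t \/ R t s) ->
     exists t, forall s, C s -> R s t) ->
  exists t, forall s, R t s -> R s t.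
Proof.
  intros Rrefl Rtrans Rchain.
  destruct (@classical_sets.ZL_preorder T t0 (fun a b => boolp.asbool (R a b)))
    as [t Hmax].
  - intros; apply boolp.asboolT; auto.
  - intros r s t H1 H2; apply boolp.asboolT.
    apply boolp.asboolW in H1; apply boolp.asboolW in H2; eauto.
  - intros C HC. destruct (Rchain C) as [t Ht].
    + intros s t Cs Ct. destruct (HC s t Cs Ct) as [H|H]; apply boolp.asboolW in H; auto.
    + exists t; intros; apply boolp.asboolT; auto.
  - exists t. intros s Hs. apply boolp.asboolW, Hmax, boolp.asboolT; auto.
Qed.

Definition injects {X Y : Type} (A : X -> Prop) (B : Y -> Prop) (h : X -> Y) : Prop :=
  (forall a, A a -> B (h a)) /\ (forall a a', A a -> A a' -> h a = h a' -> a = a').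

Section Comparability.
Variables (X Y : Type) (x0 : X) (y0 : Y) (A : X -> Prop) (B : Y -> Prop).

Record partial_inj := {
  pdom : X -> Prop;
  pfun : X -> Y;
  pdom_sub : forall a, pdom a -> A a;
  pfun_inj : injects pdom B pfun }.

Definition extends_pinj (s t : partial_inj) : Prop :=
  (forall a, pdom s a -> pdom t a) /\ (forall a, pdom s a -> pfun s a = pfun t a).

Definition empty_pinj : partial_inj.
Proof. refine {| pdom := fun _ => False; pfun := fun _ => y0 |}; [|split]; contradiction. Defined.

Lemma pinj_chain_ub (C : partial_inj -> Prop) :
  (forall s t, C s -> C t -> extends_pinj s t \/ extends_pinj t s) ->
  exists t, forall s, C s -> extends_pinj s t.
Proof.
  intros HC.
  set (D := fun a => exists s, C s /\ pdom s a).
  set (h := fun a => pfun (choose empty_pinj (fun s => C s /\ pdom s a)) a).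
  assert (Hh : forall s a, C s -> pdom s a -> h a = pfun s a).
  { intros s a Cs Ds. unfold h. set (s' := choose _ _).
    assert (Hs' : C s' /\ pdom s' a) by (apply chooseP; eauto).
    destruct Hs' as [Cs' Ds']. destruct (HC s s' Cs Cs') as [[_ E]|[_ E]]; auto.
    symmetry; auto. }
  assert (DA : forall a, D a -> A a) by (intros a [s [_ Ds]]; eapply pdom_sub; eauto).
  assert (hinj : injects D B h).
  { split.
    - intros a [s [Cs Ds]]. rewrite (Hh s a Cs Ds). apply (pfun_inj s); auto.
    - intros a a' [s [Cs Ds]] [s' [Cs' Ds']] E.
      rewrite (Hh s a Cs Ds), (Hh s' a' Cs' Ds') in E.
      destruct (HC s s' Cs Cs') as [[H1 H2]|[H1 H2]].
      + rewrite (H2 a Ds) in E. apply (pfun_inj s'); auto.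
      + rewrite (H2 a' Ds') in E. apply (pfun_inj s); auto. }
  exists {| pdom := D; pfun := h; pdom_sub := DA; pfun_inj := hinj |}.
  intros s Cs; split; simpl.
  - intros a Ds; exists s; auto.
  - intros a Ds; symmetry; apply Hh; auto.
Qed.

Lemma pinj_extend (t : partial_inj) (a : X) (b : Y) : A a -> ~ pdom t a -> B b ->
  (forall a', pdom t a' -> pfun t a' <> b) -> exists t', extends_pinj t t' /\ pdom t' a.
Proof.
  intros Aa Na Bb Nb.
  set (D := fun x => pdom t x \/ x = a).
  set (h := fun x => if excluded_middle_informative (x = a) then b else pfun t x).
  assert (DA : forall x, D x -> A x) by (intros x [Dx| ->]; [apply (pdom_sub t)|]; auto).
  assert (hinj : injects D B h).
  { split.
    - intros x Dx; unfold h; destruct excluded_middle_informative as [->|nx]; auto.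
      destruct Dx as [Dx|]; [apply (pfun_inj t)|]; tauto.
    - intros x x' Dx Dx'; unfold h.
      destruct excluded_middle_informative as [->|nx];
        destruct excluded_middle_informative as [->|nx']; intros E; auto;
        [destruct Dx' as [Dx'|]; [exfalso; apply (Nb x'); auto|tauto]
        |destruct Dx as [Dx|]; [exfalso; apply (Nb x); auto|tauto]|].
      destruct Dx as [Dx|]; [|tauto]. destruct Dx' as [Dx'|]; [|tauto].
      apply (pfun_inj t); auto. }
  exists {| pdom := D; pfun := h; pdom_sub := DA; pfun_inj := hinj |}.
  split; [split|]; simpl.
  - intros x Dx; left; auto.
  - intros x Dx; unfold h; destruct excluded_middle_informative; [subst; contradiction|auto].
  - right; auto.
Qed.

Lemma comparability : (exists h, injects A B h) \/ (exists g, injects B A g).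
Proof.
  destruct (zorn_preorder _ empty_pinj extends_pinj) as [t Hmax].
  - intros t; split; auto.
  - intros r s t [H1 H2] [H3 H4]; split; auto. intros a Ha; rewrite H2; auto.
  - exact pinj_chain_ub.
  - destruct (classic (forall a, A a -> pdom t a)) as [HA|HA].
    { left; exists (pfun t); split; intros; apply (pfun_inj t); auto. }
    destruct (classic (forall b, B b -> exists a, pdom t a /\ pfun t a = b)) as [HB|HB].
    + right. set (g := fun b => choose x0 (fun a => pdom t a /\ pfun t a = b)).
      assert (Hg : forall b, B b -> pdom t (g b) /\ pfun t (g b) = b)
        by (intros b Bb; apply chooseP, HB, Bb).
      exists g; split.
      * intros b Bb. apply (pdom_sub t), Hg, Bb.
      * intros b b' Bb Bb' E. rewrite <- (proj2 (Hg b Bb)), <- (proj2 (Hg b' Bb')), E; auto.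
    + exfalso.
      apply not_all_ex_not in HA as [a Ha]. apply imply_to_and in Ha as [Aa Na].
      apply not_all_ex_not in HB as [b Hb]. apply imply_to_and in Hb as [Bb Hb].
      destruct (pinj_extend t a b Aa Na Bb) as [t' [Htt' Dt'a]].
      { intros a' Da' E. apply Hb; eauto. }
      apply Na, (Hmax t' Htt'), Dt'a.
Qed.
End Comparability.

Section Hessenberg.
Variables (K : Type) (nu : nat -> K).
Hypothesis nu_inj : forall m n, nu m = nu n -> m = n.

Definition nat_index (a : K) : nat := choose 0 (fun n => nu n = a).

Lemma nat_indexK n : nat_index (nu n) = n.
Proof. apply nu_inj, (chooseP 0 (fun m => nu m = nu n)). eauto. Qed.

Definition pairing_inj (D : K -> Prop) (p : K -> K -> K) : Prop :=
  forall a b a' b', D a -> D b -> D a' -> D b' -> p a b = p a' b' -> a = a' /\ b = b'.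

Record pairing := {
  hdom : K -> Prop;
  hpair : K -> K -> K;
  hdom_nat : forall n, hdom (nu n);
  hpair_closed : forall a b, hdom a -> hdom b -> hdom (hpair a b);
  hpair_inj : pairing_inj hdom hpair }.

Definition extends_pairing (s t : pairing) : Prop :=
  (forall a, hdom s a -> hdom t a) /\
  (forall a b, hdom s a -> hdom s b -> hpair s a b = hpair t a b).

Definition nat_pairing : pairing.
Proof.
  refine {| hdom := fun a => exists n, a = nu n;
            hpair := fun a b => nu (Cantor.to_nat (nat_index a, nat_index b)) |}.
  - intros n; exists n; auto.
  - intros a b _ _; eauto.
  - intros a b a' b' [m ->] [n ->] [m' ->] [n' ->] E.
    apply nu_inj, (f_equal Cantor.of_nat) in E.
    rewrite !Cantor.cancel_of_to, !nat_indexK in E. injection E as -> ->; auto.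
Defined.

Lemma pairing_chain_ub (C : pairing -> Prop) :
  (forall s t, C s -> C t -> extends_pairing s t \/ extends_pairing t s) ->
  exists t, forall s, C s -> extends_pairing s t.
Proof.
  intros HC. destruct (classic (exists s, C s)) as [[s0 Cs0]|NC].
  2:{ exists nat_pairing. intros s Cs; exfalso; eauto. }
  set (D := fun a => exists s, C s /\ hdom s a).
  assert (both : forall a b, D a -> D b -> exists s, C s /\ hdom s a /\ hdom s b).
  { intros a b [s [Cs Ha]] [t [Ct Hb]].
    destruct (HC s t Cs Ct) as [[H _]|[H _]]; [exists t|exists s]; auto. }
  set (p := fun a b => hpair (choose nat_pairing (fun s => C s /\ hdom s a /\ hdom s b)) a b).
  assert (Hp : forall s a b, C s -> hdom s a -> hdom s b -> p a b = hpair s a b).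
  { intros s a b Cs Ha Hb. unfold p. set (s' := choose _ _).
    assert (Hs' : C s' /\ hdom s' a /\ hdom s' b) by (apply chooseP; eauto).
    destruct Hs' as [Cs' [Ha' Hb']].
    destruct (HC s s' Cs Cs') as [[_ E]|[_ E]]; [symmetry|]; auto. }
  assert (Dnat : forall n, D (nu n)) by (intros n; exists s0; split; auto; apply hdom_nat).
  assert (Dclosed : forall a b, D a -> D b -> D (p a b)).
  { intros a b Ha Hb. destruct (both a b Ha Hb) as [s [Cs [Ha' Hb']]].
    rewrite (Hp s a b Cs Ha' Hb'). exists s; split; auto. apply hpair_closed; auto. }
  assert (Dinj : pairing_inj D p).
  { intros a b a' b' Ha Hb Ha' Hb' E.
    destruct (both a b Ha Hb) as [s [Cs [H1 H2]]].
    destruct (both a' b' Ha' Hb') as [s' [Cs' [H3 H4]]].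
    rewrite (Hp s a b Cs H1 H2), (Hp s' a' b' Cs' H3 H4) in E.
    destruct (HC s s' Cs Cs') as [[L1 L2]|[L1 L2]].
    - rewrite L2 in E by auto. apply (hpair_inj s'); auto.
    - rewrite (L2 a' b') in E by auto. apply (hpair_inj s); auto. }
  exists {| hdom := D; hpair := p; hdom_nat := Dnat; hpair_closed := Dclosed;
            hpair_inj := Dinj |}.
  intros s Cs; split; simpl.
  - intros a Ha; exists s; auto.
  - intros a b Ha Hb; symmetry; apply Hp; auto.
Qed.

(* If [hdom t] injects into its complement via [h], then [t] extends to
   [hdom t ∪ h(hdom t)]: pairs not both in [hdom t] are sent, through [h], to a
   code of the pair of [h]-preimages tagged by which of the two entries is new. *)
Section Grow.
Variables (t : pairing) (h : K -> K).
Hypothesis h_inj : injects (hdom t) (fun k => ~ hdom t k) h.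

Definition grown_dom (a : K) : Prop := hdom t a \/ exists a0, hdom t a0 /\ a = h a0.

Definition unshift (a : K) : K :=
  if excluded_middle_informative (hdom t a) then a
  else choose (nu 0) (fun a0 => hdom t a0 /\ h a0 = a).

Lemma unshift_old a : hdom t a -> unshift a = a.
Proof. intros Ha; unfold unshift; destruct excluded_middle_informative; tauto. Qed.

Lemma unshift_new a : grown_dom a -> ~ hdom t a -> hdom t (unshift a) /\ h (unshift a) = a.
Proof.
  intros [Ha|[a0 [Ha0 ->]]] Na; [contradiction|].
  unfold unshift; destruct excluded_middle_informative; [contradiction|].
  apply (chooseP (nu 0) (fun x => hdom t x /\ h x = h a0)); eauto.
Qed.

Lemma unshift_dom a : grown_dom a -> hdom t (unshift a).
Proof.
  intros Ha. destruct (classic (hdom t a)) as [Aa|Na].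
  - rewrite unshift_old; auto.
  - apply unshift_new; auto.
Qed.

Lemma unshift_inj a a' : grown_dom a -> grown_dom a' -> (hdom t a <-> hdom t a') ->
  unshift a = unshift a' -> a = a'.
Proof.
  intros Ha Ha' Iff E. destruct (classic (hdom t a)) as [Aa|Na].
  - rewrite !unshift_old in E; tauto.
  - assert (Na' : ~ hdom t a') by tauto.
    rewrite <- (proj2 (unshift_new a Ha Na)), <- (proj2 (unshift_new a' Ha' Na')), E; auto.
Qed.

Definition side (a b : K) : nat :=
  if excluded_middle_informative (hdom t a) then 0
  else if excluded_middle_informative (hdom t b) then 1 else 2.

Lemma side_inj a b a' b' : ~ (hdom t a /\ hdom t b) -> ~ (hdom t a' /\ hdom t b') ->
  side a b = side a' b' -> (hdom t a <-> hdom t a') /\ (hdom t b <-> hdom t b').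
Proof.
  unfold side; intros N N'.
  repeat destruct excluded_middle_informative; intros E; try discriminate; tauto.
Qed.

Definition grown_pair (a b : K) : K :=
  if excluded_middle_informative (hdom t a /\ hdom t b) then hpair t a b
  else h (hpair t (nu (side a b)) (hpair t (unshift a) (unshift b))).

Lemma grown_pair_old a b : hdom t a -> hdom t b -> grown_pair a b = hpair t a b.
Proof. intros Ha Hb; unfold grown_pair; destruct excluded_middle_informative; tauto. Qed.

Lemma grown_pair_new a b : ~ (hdom t a /\ hdom t b) ->
  grown_pair a b = h (hpair t (nu (side a b)) (hpair t (unshift a) (unshift b))).
Proof. intros N; unfold grown_pair; destruct excluded_middle_informative; tauto. Qed.

Lemma grown_code_dom a b : grown_dom a -> grown_dom b ->
  hdom t (hpair t (nu (side a b)) (hpair t (unshift a) (unshift b))).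
Proof. intros; apply hpair_closed; [apply hdom_nat|apply hpair_closed; apply unshift_dom; auto]. Qed.

Lemma grown_pair_closed a b : grown_dom a -> grown_dom b -> grown_dom (grown_pair a b).
Proof.
  intros Ha Hb. destruct (classic (hdom t a /\ hdom t b)) as [[Aa Ab]|N].
  - rewrite grown_pair_old by auto. left; apply hpair_closed; auto.
  - rewrite grown_pair_new by auto. right; eexists; split; [|reflexivity]. apply grown_code_dom; auto.
Qed.

Lemma grown_pair_inj : pairing_inj grown_dom grown_pair.
Proof.
  intros a b a' b' Ha Hb Ha' Hb' E.
  pose proof (grown_code_dom a b Ha Hb) as Cab. pose proof (grown_code_dom a' b' Ha' Hb') as Cab'.
  destruct (classic (hdom t a /\ hdom t b)) as [[Aa Ab]|N];
    destruct (classic (hdom t a' /\ hdom t b')) as [[Aa' Ab']|N'].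
  - rewrite !grown_pair_old in E by auto. apply (hpair_inj t); auto.
  - rewrite grown_pair_old, grown_pair_new in E by auto.
    exfalso. apply (proj1 h_inj _ Cab'). rewrite <- E. apply hpair_closed; auto.
  - rewrite grown_pair_new, grown_pair_old in E by auto.
    exfalso. apply (proj1 h_inj _ Cab). rewrite E. apply hpair_closed; auto.
  - rewrite !grown_pair_new in E by auto. apply (proj2 h_inj) in E; auto.
    apply (hpair_inj t) in E as [Eside E]; try apply hdom_nat;
      try (apply hpair_closed; apply unshift_dom; auto).
    apply (hpair_inj t) in E as [Ea Eb]; try apply unshift_dom; auto.
    apply nu_inj, side_inj in Eside as [Ia Ib]; auto.
    split; apply unshift_inj; auto.
Qed.

Definition grown : pairing :=
  {| hdom := grown_dom; hpair := grown_pair;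
     hdom_nat := fun n => or_introl (hdom_nat t n);
     hpair_closed := grown_pair_closed; hpair_inj := grown_pair_inj |}.

Lemma grown_extends : extends_pairing t grown.
Proof. split; simpl; [left; auto|intros; symmetry; apply grown_pair_old; auto]. Qed.

Lemma grown_new : hdom grown (h (nu 0)) /\ ~ hdom t (h (nu 0)).
Proof.
  split; [right; exists (nu 0); split; auto|]; [apply hdom_nat|apply (proj1 h_inj), hdom_nat].
Qed.
End Grow.

Lemma pairing_of_cover (t : pairing) (g : K -> K) :
  injects (fun k => ~ hdom t k) (hdom t) g ->
  exists p : K -> K -> K, forall a b a' b', p a b = p a' b' -> a = a' /\ b = b'.
Proof.
  intros [gdom ginj].
  set (q := fun k => if excluded_middle_informative (hdom t k) then hpair t (nu 0) k
                     else hpair t (nu 1) (g k)).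
  assert (qdom : forall k, hdom t (q k)).
  { intros k; unfold q; destruct excluded_middle_informative;
      apply hpair_closed; auto; apply hdom_nat. }
  assert (qinj : forall k k', q k = q k' -> k = k').
  { intros k k'; unfold q.
    destruct excluded_middle_informative as [Ak|Nk];
      destruct excluded_middle_informative as [Ak'|Nk']; intros E;
      apply (hpair_inj t) in E as [E1 E2]; auto; try apply hdom_nat;
      try (apply nu_inj in E1; discriminate). }
  exists (fun a b => hpair t (q a) (q b)). intros a b a' b' E.
  apply (hpair_inj t) in E as [E1 E2]; auto.
Qed.

Lemma hessenberg : exists p : K -> K -> K, forall a b a' b', p a b = p a' b' -> a = a' /\ b = b'.
Proof.
  destruct (zorn_preorder _ nat_pairing extends_pairing) as [t Hmax].
  - intros t; split; auto.
  - intros r s t [H1 H2] [H3 H4]; split; auto. intros a b Ha Hb; rewrite H2 by auto; auto.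
  - exact pairing_chain_ub.
  - destruct (comparability K K (nu 0) (nu 0) (hdom t) (fun k => ~ hdom t k))
      as [[h Hh]|[g Hg]].
    + exfalso. destruct (grown_new t h Hh) as [Hin Hout].
      apply Hout, (Hmax _ (grown_extends t h Hh)), Hin.
    + exact (pairing_of_cover t g Hg).
Qed.
End Hessenberg.

Lemma infinite_inhabited (K : Type) : infinite_type K -> inhabited K.
Proof.
  intros HK. apply NNPP; intros NK. apply HK; exists nil; intros x; apply NK; constructor; auto.
Qed.

Lemma nat_inj_of_infinite (K : Type) : infinite_type K ->
  exists nu : nat -> K, forall m n, nu m = nu n -> m = n.
Proof.
  intros HK. destruct (infinite_inhabited K HK) as [k0].
  set (fresh := fun l : list K => choose k0 (fun k => ~ In k l)).
  assert (Hfresh : forall l, ~ In (fresh l) l).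
  { intros l. apply (chooseP k0 (fun k => ~ In k l)).
    apply not_all_ex_not. intros H; apply HK; exists l; exact H. }
  set (L := fix L n := match n with 0 => nil | S n => L n ++ fresh (L n) :: nil end).
  assert (HL : forall m n, m < n -> In (fresh (L m)) (L n)).
  { intros m n; induction n; intros H; [lia|]. simpl. apply in_or_app.
    destruct (PeanoNat.Nat.eq_dec m n) as [->|ne]; [right; left; auto|left; apply IHn; lia]. }
  exists (fun n => fresh (L n)). intros m n E.
  destruct (PeanoNat.Nat.lt_trichotomy m n) as [H|[H|H]]; auto; exfalso.
  - apply (Hfresh (L n)). rewrite <- E. apply HL; auto.
  - apply (Hfresh (L m)). rewrite E. apply HL; auto.
Qed.

Section Encoding.
Variables (K : Type) (nu : nat -> K) (p : K -> K -> K).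
Hypothesis nu_inj : forall m n, nu m = nu n -> m = n.
Hypothesis p_inj : forall a b a' b', p a b = p a' b' -> a = a' /\ b = b'.

Lemma nat_indexP k : (exists m, k = nu m) -> nu (nat_index K nu k) = k.
Proof. intros [m ->]. rewrite nat_indexK; auto. Qed.

Definition shift (k : K) : K :=
  if excluded_middle_informative (exists m, k = nu m) then nu (S (nat_index K nu k)) else k.

Lemma shift_inj k k' : shift k = shift k' -> k = k'.
Proof.
  unfold shift; repeat destruct excluded_middle_informative as [?|?]; intros E; auto.
  - apply nu_inj in E; injection E as E.
    rewrite <- (nat_indexP k), <- (nat_indexP k'), E; auto.
  - subst; exfalso; eauto.
  - subst; exfalso; eauto.
Qed.

Lemma shift_neq0 k : shift k <> nu 0.
Proof.
  unfold shift; destruct excluded_middle_informative as [_|Nk]; intros E.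
  - apply nu_inj in E; discriminate.
  - apply Nk; eauto.
Qed.

Fixpoint enc_list {A : Type} (e : A -> K) (l : list A) : K :=
  match l with nil => nu 0 | a :: l => shift (p (e a) (enc_list e l)) end.

Lemma enc_list_inj {A : Type} (e : A -> K) : (forall x y, e x = e y -> x = y) ->
  forall l l', enc_list e l = enc_list e l' -> l = l'.
Proof.
  intros e_inj; induction l as [|a l IH]; intros [|a' l'] E; simpl in E; auto.
  - exfalso; apply (shift_neq0 _ (eq_sym E)).
  - exfalso; apply (shift_neq0 _ E).
  - apply shift_inj, p_inj in E as [Ea El]. f_equal; auto.
Qed.

Definition enc_letter (bl : bool * list K) : K :=
  p (nu (if fst bl then 0 else 1)) (enc_list (fun k => k) (snd bl)).

Definition enc_index (t : nat * list (bool * list K)) : K :=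
  p (nu (fst t)) (enc_list enc_letter (snd t)).

Lemma enc_index_inj t t' : enc_index t = enc_index t' -> t = t'.
Proof.
  assert (letter_inj : forall x y, enc_letter x = enc_letter y -> x = y).
  { intros [b l] [b' l'] E; apply p_inj in E as [Eb El].
    apply (enc_list_inj (fun k => k)) in El; auto; simpl in El; subst.
    apply nu_inj in Eb. destruct b, b'; simpl in Eb; try discriminate; reflexivity. }
  destruct t as [n w]; destruct t' as [n' w']; intros E.
  apply p_inj in E as [En Ew]. apply nu_inj in En. simpl in En.
  apply enc_list_inj in Ew; simpl in *; subst; auto.
Qed.
End Encoding.

Lemma index_surjection (K : Type) : infinite_type K ->
  exists s : K -> nat * list (bool * list K), forall t, exists k, s k = t.
Proof.
  intros HK. destruct (nat_inj_of_infinite K HK) as [nu nu_inj].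
  destruct (hessenberg K nu nu_inj) as [p p_inj].
  exists (fun k => choose (0, nil) (fun t => enc_index K nu p t = k)).
  intros t; exists (enc_index K nu p t).
  apply (enc_index_inj K nu p nu_inj p_inj).
  apply (chooseP (0, nil) (fun t' => enc_index K nu p t' = enc_index K nu p t)); eauto.
Qed.

(** * Topological groups *)

Notation "x ** y" := (gmul x y) (at level 40, left associativity).

Existing Class is_group.

Section GroupLemmas.
Context {G : TopGroup} {HG : is_group G}.

Lemma mulgA (x y z : G) : x ** (y ** z) = x ** y ** z.
Proof. apply HG. Qed.
Lemma mul1g (x : G) : gone ** x = x.
Proof. apply HG. Qed.
Lemma mulg1 (x : G) : x ** gone = x.
Proof. apply HG. Qed.
Lemma mulVg (x : G) : ginv x ** x = gone.
Proof. apply HG. Qed.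
Lemma mulgV (x : G) : x ** ginv x = gone.
Proof. apply HG. Qed.
Lemma mulKg (x y : G) : ginv x ** (x ** y) = y.
Proof. rewrite mulgA, mulVg, mul1g; auto. Qed.
Lemma mulKVg (x y : G) : x ** (ginv x ** y) = y.
Proof. rewrite mulgA, mulgV, mul1g; auto. Qed.
Lemma mulgK (x y : G) : x ** y ** ginv y = x.
Proof. rewrite <- mulgA, mulgV, mulg1; auto. Qed.
Lemma mulgKV (x y : G) : x ** ginv y ** y = x.
Proof. rewrite <- mulgA, mulVg, mulg1; auto. Qed.
Lemma mulgI (x y z : G) : x ** y = x ** z -> y = z.
Proof. intros E. rewrite <- (mulKg x y), E, mulKg; auto. Qed.
Lemma invg_of_mul1 (x y : G) : x ** y = gone -> y = ginv x.
Proof. intros E. apply (mulgI x). rewrite E, mulgV; auto. Qed.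
Lemma invgK (x : G) : ginv (ginv x) = x.
Proof. symmetry; apply invg_of_mul1, mulVg. Qed.
Lemma invMg (x y : G) : ginv (x ** y) = ginv y ** ginv x.
Proof. symmetry; apply invg_of_mul1. rewrite mulgA, <- (mulgA x y), mulgV, mulg1, mulgV; auto. Qed.
Lemma invg1 : ginv (@gone G) = gone.
Proof. symmetry; apply invg_of_mul1, mul1g. Qed.
Lemma eq_of_divg1 (x y : G) : ginv x ** y = gone -> x = y.
Proof. intros E. apply invg_of_mul1 in E. rewrite E, invgK; auto. Qed.
Lemma conjgM (g x y : G) : g ** (x ** y) ** ginv g = (g ** x ** ginv g) ** (g ** y ** ginv g).
Proof. rewrite !mulgA. f_equal. rewrite <- (mulgA g _ _), mulgKV, !mulgA; auto. Qed.
End GroupLemmas.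

Lemma morph1 (G H : TopGroup) (f : G -> H) : is_group G -> is_group H ->
  homomorphism f -> f gone = gone.
Proof. intros HG HH Hf. apply (mulgI (f gone)). rewrite <- Hf, !mulg1; auto. Qed.

Lemma morphV (G H : TopGroup) (f : G -> H) : is_group G -> is_group H ->
  homomorphism f -> forall x, f (ginv x) = ginv (f x).
Proof. intros HG HH Hf x. apply invg_of_mul1. rewrite <- Hf, mulgV, morph1; auto. Qed.

Definition normal {G : TopGroup} (W : G -> Prop) : Prop :=
  forall g x : G, W x -> W (g ** x ** ginv g).

Section SubgroupLemmas.
Context {G : TopGroup} {HG : is_group G}.
Variable W : G -> Prop.

Lemma subgroup_trans (a b c : G) : is_subgroup W ->
  W (ginv a ** b) -> W (ginv b ** c) -> W (ginv a ** c).
Proof.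
  intros [_ [WM _]] Hab Hbc. rewrite <- (mulKVg b c), mulgA. auto.
Qed.

Lemma subgroup_sym (a b : G) : is_subgroup W -> W (ginv a ** b) -> W (ginv b ** a).
Proof.
  intros [_ [_ WV]] Hab. replace (ginv b ** a) with (ginv (ginv a ** b)); auto.
  rewrite invMg, invgK; auto.
Qed.

Lemma normal_ent_two (a b : G) : normal W -> W (ginv a ** b) -> ent_two W a b.
Proof.
  intros NW Hab. split; [exact Hab|]. unfold ent_right.
  rewrite <- (mulKVg a b) at 1. apply NW, Hab.
Qed.
Lemma normal_near_mul (a b c d : G) : is_subgroup W -> normal W ->
  W (ginv a ** c) -> W (ginv b ** d) -> W (ginv (a ** b) ** (c ** d)).
Proof.
  intros [_ [WM _]] NW Hac Hbd.
  pose proof (NW (ginv b) _ Hac) as Hc. rewrite invgK in Hc.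
  replace (ginv (a ** b) ** (c ** d)) with ((ginv b ** (ginv a ** c) ** b) ** (ginv b ** d)); auto.
  rewrite invMg, <- !mulgA. f_equal. rewrite mulKVg, mulgA; auto.
Qed.
End SubgroupLemmas.

Definition open_normal_base (G : TopGroup) : Prop := forall V : G -> Prop, nbhd_e V ->
  exists W, gopen W /\ is_subgroup W /\ normal W /\ forall x, W x -> V x.

Existing Class is_topgroup.
#[export] Instance topgroup_group {G : TopGroup} (H : is_topgroup G) : is_group G := proj1 H.

Section TopLemmas.
Context {G : TopGroup} {HT : is_topgroup G}.

Lemma open_ext (U V : G -> Prop) : gopen U -> (forall x, U x <-> V x) -> gopen V.
Proof.
  intros HU H.
  replace V with U; auto.
  apply functional_extensionality; intros; apply propositional_extensionality; auto.
Qed.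

Lemma open_union (I : Type) (U : I -> G -> Prop) :
  (forall i, gopen (U i)) -> gopen (fun x => exists i, U i x).
Proof. apply HT. Qed.

Lemma open_of_local (A : G -> Prop) :
  (forall x, A x -> exists U, gopen U /\ U x /\ forall y, U y -> A y) -> gopen A.
Proof.
  intros H.
  set (I := {U : G -> Prop | gopen U /\ forall y, U y -> A y}).
  apply (open_ext _ _ (open_union I (@proj1_sig _ _) (fun i => proj1 (proj2_sig i)))).
  intros x; split.
  - intros [[U [HU HA]] Ux]. apply HA; auto.
  - intros Ax. destruct (H x Ax) as [U [HU [Ux HUA]]]. exists (exist _ U (conj HU HUA)); auto.
Qed.

Lemma open_true : gopen (fun _ : G => True).
Proof. apply HT. Qed.
Lemma open_and (U V : G -> Prop) : gopen U -> gopen V -> gopen (fun x => U x /\ V x).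
Proof. apply HT. Qed.
Lemma mul_cont : mul_continuous G.
Proof. apply HT. Qed.
Lemma hausdorffT : hausdorff G.
Proof. apply HT. Qed.
Lemma open_inv (U : G -> Prop) : gopen U -> gopen (fun x => U (ginv x)).
Proof. apply HT. Qed.

Lemma open_transl (a : G) (U : G -> Prop) : gopen U -> gopen (fun x => U (a ** x)).
Proof.
  intros HU. apply open_of_local. intros x Ux.
  destruct (mul_cont U a x HU Ux) as [A [B [HA [HB [Aa [Bx HAB]]]]]].
  exists B; split; auto.
Qed.

Lemma nbhd_e_open (U : G -> Prop) : gopen U -> U gone -> nbhd_e U.
Proof. intros; exists U; auto. Qed.

Lemma nbhd_e_transl (a : G) (U : G -> Prop) : gopen U -> U a -> nbhd_e (fun x => U (a ** x)).
Proof. intros HU Ua. apply nbhd_e_open; [apply open_transl|rewrite mulg1]; auto. Qed.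

Lemma subgroup_open (M : G -> Prop) : is_subgroup M -> nbhd_e M -> gopen M.
Proof.
  intros [M1 [M2 M3]] [W [HW [W1 WM]]]. apply open_of_local. intros m Mm.
  exists (fun x => W (ginv m ** x)). split; [apply open_transl; auto|split].
  - rewrite mulVg; auto.
  - intros y Wy. rewrite <- (mulKVg m y). auto.
Qed.

Lemma eq1_of_nbhds (x : G) : (forall V, nbhd_e V -> V x) -> x = gone.
Proof.
  intros H. apply NNPP; intros Nx.
  destruct (hausdorffT x gone Nx) as [U [V [HU [HV [Ux [Ve D]]]]]].
  apply (D x); auto. apply H, nbhd_e_open; auto.
Qed.

Lemma eq_of_open_normal_base (a b : G) : open_normal_base G ->
  (forall W, gopen W -> is_subgroup W -> normal W -> W (ginv a ** b)) -> a = b.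
Proof.
  intros Hnb HW. apply eq_of_divg1, eq1_of_nbhds. intros V HV.
  destruct (Hnb V HV) as [W [Wo [WS [WN WV]]]]. apply WV, HW; auto.
Qed.

Lemma open_normal_base_of_balanced : non_archimedean G -> balanced G -> open_normal_base G.
Proof.
  intros HNA [Hb _] V HV.
  destruct (HNA V HV) as [V' [HV' [SV' V'V]]].
  destruct (Hb V' (nbhd_e_open V' HV' (proj1 SV'))) as [W [HW HWV]].
  destruct (HNA W HW) as [W' [HW' [SW' W'W]]].
  (* the normal core of [V'] contains [W'] because left and right entourages agree *)
  set (M := fun z => forall g, V' (g ** z ** ginv g)).
  destruct SV' as [V1 [V2 V3]].
  assert (SM : is_subgroup M).
  { split; [|split].
    - intros g. rewrite mulg1, mulgV; auto.
    - intros x y Mx My g. rewrite conjgM; auto.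
    - intros x Mx g. replace (g ** ginv x ** ginv g) with (ginv (g ** x ** ginv g)); auto.
      rewrite !invMg, invgK, mulgA; auto. }
  exists M; split; [|split; [auto|split]].
  - apply subgroup_open; auto. exists W'; split; auto. split; [apply SW'|].
    intros x W'x g. apply (HWV g (g ** x)). unfold ent_left. rewrite mulKg; auto.
  - intros g x Mx h. specialize (Mx (h ** g)).
    rewrite invMg, !mulgA in Mx. rewrite !mulgA; auto.
  - intros x Mx. apply V'V. specialize (Mx gone). rewrite mul1g, invg1, mulg1 in Mx; auto.
Qed.

Lemma open_normal_base_of_abelian : non_archimedean G -> abelian G -> open_normal_base G.
Proof.
  intros HNA Hab V HV. destruct (HNA V HV) as [W [HW [SW WV]]].
  exists W; repeat split; auto; try apply SW.
  intros g x Wx. rewrite (Hab g x), mulgK; auto.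
Qed.

Lemma boolean_mulgg : boolean G -> forall x : G, x ** x = gone.
Proof.
  intros Hb x. destruct (classic (x = gone)) as [->|n]; [apply mul1g|apply Hb; auto].
Qed.

Lemma boolean_abelian : boolean G -> abelian G.
Proof.
  intros Hb x y. pose proof (boolean_mulgg Hb) as B.
  assert (Iv : forall z : G, ginv z = z) by (intros z; symmetry; apply invg_of_mul1; auto).
  rewrite <- (Iv (x ** y)), invMg, !Iv; auto.
Qed.

Lemma non_archimedean_of_base : open_normal_base G -> non_archimedean G.
Proof. intros H V HV. destruct (H V HV) as [W [HW [SW [_ WV]]]]. exists W; auto. Qed.

Lemma balanced_of_base : open_normal_base G -> balanced G.
Proof.
  intros H; split; intros V HV; destruct (H V HV) as [W [HW [SW [NW WV]]]];
    exists W; (split; [apply nbhd_e_open; auto; apply SW|]); unfold ent_left, ent_right;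
    intros x y Wxy; apply WV.
  - rewrite <- (mulKVg x y) at 1. apply NW; auto.
  - replace (ginv x ** y) with (ginv x ** (y ** ginv x) ** ginv (ginv x)); [apply NW; auto|].
    rewrite invgK, <- mulgA, mulgKV; auto.
Qed.
End TopLemmas.

(** * Chains of open normal subgroups and metrizability *)

Definition least_recip (Q : nat -> Prop) : R :=
  match excluded_middle_informative (exists n, Q n) with
  | left H =>
      / (INR (proj1_sig (constructive_indefinite_description _
               (dec_inh_nat_subset_has_unique_least_element Q (fun n => classic (Q n)) H)))
         + 1)
  | right _ => 0
  end.

Lemma INR_succ_pos n : (0 < INR n + 1)%R.
Proof. pose proof (pos_INR n); lra. Qed.

Record normal_chain_base (G : TopGroup) (N : nat -> G -> Prop) : Prop := {
  ncb_subgroup : forall n, is_subgroup (N n);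
  ncb_normal : forall n, normal (N n);
  ncb_open : forall n, gopen (N n);
  ncb_decr : forall n x, N (S n) x -> N n x;
  ncb_base : forall V, nbhd_e V -> exists n, forall x, N n x -> V x }.

Section NormalChainBase.
Context {G : TopGroup} {HT : is_topgroup G}.
Variable N : nat -> G -> Prop.
Hypothesis HN : normal_chain_base G N.

Lemma ncb_le m n x : m <= n -> N n x -> N m x.
Proof. induction 1; auto. intros; apply IHle, (ncb_decr _ _ HN); auto. Qed.

Lemma ncb_one n : N n gone.
Proof. apply (ncb_subgroup _ _ HN). Qed.

Lemma ncb_refl n (a : G) : N n (ginv a ** a).
Proof. rewrite mulVg; apply ncb_one. Qed.

Lemma ncb_trans n (a b c : G) : N n (ginv a ** b) -> N n (ginv b ** c) -> N n (ginv a ** c).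
Proof. apply subgroup_trans, (ncb_subgroup _ _ HN). Qed.

Lemma ncb_sym n (a b : G) : N n (ginv a ** b) -> N n (ginv b ** a).
Proof. apply subgroup_sym, (ncb_subgroup _ _ HN). Qed.

Lemma ncb_coset_open n (a : G) : gopen (fun x => N n (ginv a ** x)).
Proof. apply open_transl, (ncb_open _ _ HN). Qed.

Lemma ncb_nbhd (U : G -> Prop) (z : G) : gopen U -> U z ->
  exists n, forall y, N n (ginv z ** y) -> U y.
Proof.
  intros HU Uz. destruct (ncb_base _ _ HN _ (nbhd_e_transl z U HU Uz)) as [n Hn].
  exists n. intros y Hy. rewrite <- (mulKVg z y). auto.
Qed.

Lemma ncb_eq (a b : G) : (forall n, N n (ginv a ** b)) -> a = b.
Proof.
  intros H. apply eq_of_divg1, eq1_of_nbhds. intros V HV.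
  destruct (ncb_base _ _ HN V HV) as [n Hn]. auto.
Qed.

Lemma open_normal_base_of_ncb : open_normal_base G.
Proof.
  intros V HV. destruct (ncb_base _ _ HN V HV) as [n Hn].
  exists (N n). repeat split; auto; apply HN.
Qed.

Definition chain_dist (x y : G) : R := least_recip (fun n => ~ N n (ginv x ** y)).

Lemma chain_dist_cases x y :
  (chain_dist x y = 0%R /\ forall n, N n (ginv x ** y)) \/
  exists m, chain_dist x y = (/ (INR m + 1))%R /\ ~ N m (ginv x ** y) /\
            forall k, k < m -> N k (ginv x ** y).
Proof.
  unfold chain_dist, least_recip. destruct excluded_middle_informative as [H|H].
  - right. destruct constructive_indefinite_description as [m [[Hm Hle] Huniq]]; simpl.
    exists m; repeat split; auto. intros k Hk. apply NNPP; intros Nk.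
    specialize (Hle k Nk). lia.
  - left; split; auto. intros n. apply NNPP; intros Nn; eauto.
Qed.

Lemma chain_dist_ge0 x y : (0 <= chain_dist x y)%R.
Proof.
  destruct (chain_dist_cases x y) as [[-> _]|[m [-> _]]]; [lra|].
  left; apply Rinv_0_lt_compat, INR_succ_pos.
Qed.

Lemma chain_dist_lt x y n : (chain_dist x y < / (INR n + 1))%R <-> N n (ginv x ** y).
Proof.
  pose proof (INR_succ_pos n).
  destruct (chain_dist_cases x y) as [[-> H0]|[m [-> [Hm Hk]]]].
  - split; auto. intros _. apply Rinv_0_lt_compat; auto.
  - pose proof (INR_succ_pos m). split; intros H1.
    + apply Hk, INR_lt. destruct (Rlt_or_le (INR n) (INR m)) as [h|h]; auto.
      assert (INR m + 1 <= INR n + 1)%R as Hle by lra.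
      apply Rinv_le_contravar in Hle; auto. lra.
    + destruct (PeanoNat.Nat.lt_ge_cases n m) as [h|h].
      * apply Rinv_lt_contravar; [nra|]. apply lt_INR in h; lra.
      * exfalso; apply Hm, (ncb_le m n); auto.
Qed.

Lemma chain_dist_ultra x y z :
  (chain_dist x z <= Rmax (chain_dist x y) (chain_dist y z))%R.
Proof.
  destruct (Rle_or_lt (chain_dist x z) (Rmax (chain_dist x y) (chain_dist y z))) as [h|h];
    auto; exfalso.
  destruct (chain_dist_cases x z) as [[E _]|[m [E [Hm _]]]]; rewrite E in h.
  - pose proof (chain_dist_ge0 x y); pose proof (Rmax_l (chain_dist x y) (chain_dist y z)).
    lra.
  - apply Hm. apply (ncb_trans m x y z); apply chain_dist_lt.
    + pose proof (Rmax_l (chain_dist x y) (chain_dist y z)); lra.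
    + pose proof (Rmax_r (chain_dist x y) (chain_dist y z)); lra.
Qed.

Lemma metrizable_of_ncb : metrizable G.
Proof.
  exists chain_dist. split; [exact chain_dist_ge0|split; [|split; [|split]]].
  - intros x y; split.
    + destruct (chain_dist_cases x y) as [[_ H0]|[m [-> _]]]; intros Z.
      * apply ncb_eq; auto.
      * exfalso. pose proof (Rinv_0_lt_compat _ (INR_succ_pos m)). lra.
    + intros ->. destruct (chain_dist_cases y y) as [[E _]|[m [_ [Hm _]]]]; auto.
      exfalso; apply Hm, ncb_refl.
  - intros x y. unfold chain_dist. f_equal.
    apply functional_extensionality; intros n.
    apply propositional_extensionality. split; intros H1 H2; apply H1, ncb_sym, H2.
  - intros x y z. pose proof (chain_dist_ultra x y z).
    pose proof (chain_dist_ge0 x y); pose proof (chain_dist_ge0 y z).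
    unfold Rmax in *; destruct Rle_dec; lra.
  - intros U; split.
    + intros HU x Ux. destruct (ncb_nbhd U x HU Ux) as [n Hn].
      exists (/ (INR n + 1))%R. split; [apply Rinv_0_lt_compat, INR_succ_pos|].
      intros y Hy. apply Hn, chain_dist_lt, Hy.
    + intros H. apply open_of_local. intros x Ux. destruct (H x Ux) as [eps [Heps Hb]].
      destruct (archimed_cor1 eps Heps) as [n [Hn Hn0]].
      exists (fun y => N n (ginv x ** y)). split; [apply ncb_coset_open|split; [apply ncb_refl|]].
      intros y Hy. apply Hb. apply chain_dist_lt in Hy.
      assert (INR n < INR n + 1)%R by lra.
      apply Rinv_lt_contravar in H0; [lra|]. pose proof (lt_0_INR n Hn0). nra.
Qed.
End NormalChainBase.

Lemma weight_le_of_ncb {G : TopGroup} {HT : is_topgroup G} (N : nat -> G -> Prop)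
    (K I : Type) (D : I -> G) (s : K -> nat * I) :
  normal_chain_base G N -> (forall t, exists k, s k = t) ->
  (forall n z, exists d, N n (ginv z ** D d)) -> weight_le G K.
Proof.
  intros HN Hs Hdense.
  exists (fun k => fun z => N (fst (s k)) (ginv (D (snd (s k))) ** z)). split.
  - intros k. apply (ncb_coset_open N HN).
  - intros U z HU Uz. destruct (ncb_nbhd N HN U z HU Uz) as [n Hn].
    destruct (Hdense n z) as [d Hd]. destruct (Hs (n, d)) as [k Hk].
    exists k. rewrite Hk; simpl. split.
    + apply (ncb_sym N HN), Hd.
    + intros y Hy. apply Hn, (ncb_trans N HN n z (D d) y); auto.
Qed.

(** * Subgroups and chain topologies *)

Definition SubTG (G : TopGroup) (P : G -> Prop) (SP : is_subgroup P) : TopGroup := {|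
  carrier := sig P;
  gmul := fun a b => exist P (proj1_sig a ** proj1_sig b)
                       (proj1 (proj2 SP) _ _ (proj2_sig a) (proj2_sig b));
  ginv := fun a => exist P (ginv (proj1_sig a)) (proj2 (proj2 SP) _ (proj2_sig a));
  gone := exist P gone (proj1 SP);
  gopen := fun U => exists W : G -> Prop, gopen W /\ forall s, U s <-> W (proj1_sig s) |}.

Lemma sig_eq {A : Type} {P : A -> Prop} (a b : sig P) : proj1_sig a = proj1_sig b -> a = b.
Proof.
  destruct a as [a pa]; destruct b as [b pb]; simpl; intros ->. f_equal; apply proof_irrelevance.
Qed.

Section Subgroup.
Context {G : TopGroup} {HT : is_topgroup G}.
Variables (P : G -> Prop) (SP : is_subgroup P).

Lemma sub_open (W : G -> Prop) : gopen W -> @gopen (SubTG G P SP) (fun s => W (proj1_sig s)).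
Proof. intros HW; exists W; split; tauto. Qed.

Lemma sub_group : is_group (SubTG G P SP).
Proof.
  split; [|split].
  - intros x y z; apply sig_eq, mulgA.
  - intros x; split; apply sig_eq; [apply mul1g|apply mulg1].
  - intros x; split; apply sig_eq; [apply mulVg|apply mulgV].
Qed.

Lemma sub_topology : is_topology (SubTG G P SP).
Proof.
  split; [|split].
  - exists (fun _ => True); split; [apply open_true|tauto].
  - intros U V [W1 [H1 E1]] [W2 [H2 E2]].
    exists (fun x => W1 x /\ W2 x); split; [apply open_and; auto|].
    intros s; rewrite E1, E2; tauto.
  - intros I U HU.
    set (W := fun i => proj1_sig (constructive_indefinite_description _ (HU i))).
    assert (HW : forall i, gopen (W i) /\ forall s, U i s <-> W i (proj1_sig s)).
    { intros i; unfold W; destruct constructive_indefinite_description; simpl; auto. }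
    exists (fun x => exists i, W i x). split.
    + apply open_union. intros; apply HW.
    + intros s; split; intros [k Hk]; exists k; apply HW; auto.
Qed.

Lemma sub_topgroup : is_topgroup (SubTG G P SP).
Proof.
  split; [exact sub_group|split; [exact sub_topology|split; [|split]]].
  - intros x y Nxy.
    assert (N' : proj1_sig x <> proj1_sig y) by (intros E; apply Nxy, sig_eq; auto).
    destruct (hausdorffT _ _ N') as [U [V [HU [HV [Ux [Vy D]]]]]].
    exists (fun s => U (proj1_sig s)), (fun s => V (proj1_sig s)).
    repeat split; try apply sub_open; auto. intros z; apply D.
  - intros W x y [W' [HW' E]] Wxy. apply E in Wxy; simpl in Wxy.
    destruct (mul_cont W' _ _ HW' Wxy) as [A [B [HA [HB [Ax [By HAB]]]]]].
    exists (fun s => A (proj1_sig s)), (fun s => B (proj1_sig s)).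
    repeat split; try apply sub_open; auto. intros a b Aa Bb. apply E, HAB; auto.
  - intros W [W' [HW' E]]. exists (fun x => W' (ginv x)). split; [apply open_inv; auto|].
    intros s. rewrite E. simpl. tauto.
Qed.

Lemma sub_open_normal_base : open_normal_base G -> open_normal_base (SubTG G P SP).
Proof.
  intros Hnb V [U [[W [HW E]] [Ue UV]]].
  destruct (Hnb W (nbhd_e_open W HW (proj1 (E _) Ue))) as [M [HM [[M1 [M2 M3]] [NM MW]]]].
  exists (fun s => M (proj1_sig s)).
  repeat split; try apply sub_open; auto.
  - intros x y; apply M2.
  - intros x; apply M3.
  - intros g x; apply NM.
  - intros x Mx. apply UV, E, MW; auto.
Qed.

Lemma sub_abelian : abelian G -> abelian (SubTG G P SP).
Proof. intros H x y; apply sig_eq, H. Qed.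

Lemma sub_boolean : boolean G -> boolean (SubTG G P SP).
Proof. intros H x _; apply sig_eq, boolean_mulgg, H. Qed.
End Subgroup.

Record normal_chain (G : TopGroup) (N : nat -> G -> Prop) : Prop := {
  nc_subgroup : forall n, is_subgroup (N n);
  nc_normal : forall n, normal (N n);
  nc_decr : forall n x, N (S n) x -> N n x;
  nc_sep : forall x, (forall n, N n x) -> x = gone }.

(* [G] retopologised by declaring the cosets of the [N n] a base. *)
Definition ChainTG (G : TopGroup) (N : nat -> G -> Prop) : TopGroup := {|
  carrier := carrier G; gmul := @gmul G; ginv := @ginv G; gone := @gone G;
  gopen := fun U => forall z, U z -> exists n, forall w, N n (ginv z ** w) -> U w |}.

#[export] Instance chain_group {G : TopGroup} {HG : is_group G} (N : nat -> G -> Prop) :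
  is_group (ChainTG G N) := HG.

Section ChainTopology.
Context {G : TopGroup} {HG : is_group G}.
Variable N : nat -> G -> Prop.
Hypothesis HN : normal_chain G N.

Lemma nc_le m n x : m <= n -> N n x -> N m x.
Proof. induction 1; auto. intros; apply IHle, (nc_decr _ _ HN); auto. Qed.

Lemma chain_coset_open n (a : G) : @gopen (ChainTG G N) (fun w => N n (ginv a ** w)).
Proof.
  intros z Hz. exists n. intros w Hw. simpl in *.
  apply (subgroup_trans _ a z w); auto. apply HN.
Qed.

Lemma chain_hausdorff : hausdorff (ChainTG G N).
Proof.
  intros x y Nxy.
  assert (exists n, ~ N n (ginv x ** y)) as [n Hn].
  { apply not_all_ex_not. intros H. apply Nxy, eq_of_divg1, (nc_sep _ _ HN); auto. }
  exists (fun w => N n (ginv x ** w)), (fun w => N n (ginv y ** w)).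
  split; [apply chain_coset_open|split; [apply chain_coset_open|]].
  simpl; rewrite !mulVg. split; [apply HN|split; [apply HN|]].
  intros w H1 H2. apply Hn. apply (subgroup_trans _ x w y); [apply HN|auto|].
  apply (subgroup_sym _ y w); auto; apply HN.
Qed.

Lemma chain_topgroup : is_topgroup (ChainTG G N).
Proof.
  pose proof (nc_subgroup _ _ HN) as Nsub.
  split; [exact HG|split; [|split; [exact chain_hausdorff|split]]].
  - split; [|split].
    + intros z _; exists 0; auto.
    + intros U V HU HV z [Uz Vz].
      destruct (HU z Uz) as [n1 H1]. destruct (HV z Vz) as [n2 H2].
      exists (max n1 n2). intros w Hw.
      split; [apply H1, (nc_le n1 (max n1 n2))|apply H2, (nc_le n2 (max n1 n2))]; auto; lia.
    + intros I U HU z [k Hk]. destruct (HU k z Hk) as [n Hn]. exists n; intros w Hw; exists k; auto.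
  - intros W x y HW Wxy. destruct (HW _ Wxy) as [n Hn].
    exists (fun w => N n (ginv x ** w)), (fun w => N n (ginv y ** w)).
    split; [apply chain_coset_open|split; [apply chain_coset_open|]].
    simpl; rewrite !mulVg. split; [apply Nsub|split; [apply Nsub|]].
    intros a b Ha Hb. apply Hn. simpl in *.
    pose proof (nc_normal _ _ HN n (ginv y) _ Ha) as Hc. rewrite invgK in Hc.
    replace (ginv (x ** y) ** (a ** b)) with ((ginv y ** (ginv x ** a) ** y) ** (ginv y ** b)).
    + apply Nsub; auto.
    + rewrite invMg, <- !mulgA. f_equal. rewrite mulKVg, mulgA; auto.
  - intros W HW z Wz. simpl in Wz. destruct (HW _ Wz) as [n Hn]. exists n. intros w Hw.
    apply Hn. simpl. rewrite invgK.
    replace (z ** ginv w) with (z ** ginv (ginv z ** w) ** ginv z).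
    + apply (nc_normal _ _ HN), (Nsub n), Hw.
    + rewrite invMg, invgK, <- mulgA, mulgK; auto.
Qed.

Lemma chain_ncb : normal_chain_base (ChainTG G N) N.
Proof.
  pose proof (nc_subgroup _ _ HN) as Nsub.
  split; try apply HN.
  - intros n z Hz. exists n. intros w Hw. rewrite <- (mulKVg z w). apply Nsub; auto.
  - intros V [U [HU [Ue UV]]]. destruct (HU _ Ue) as [n Hn].
    exists n. intros x Hx. apply UV, Hn. simpl. rewrite invg1, mul1g; auto.
Qed.
End ChainTopology.

(** * Free groups over K^nat *)

Record admissible (Omega : TopGroup -> Prop) : Prop := {
  adm_topgroup : forall G, Omega G -> is_topgroup G /\ open_normal_base G;
  adm_sub : forall G P SP, Omega G -> Omega (SubTG G P SP);
  adm_chain : forall G N, Omega G -> normal_chain G N -> Omega (ChainTG G N);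
  adm_completion : forall F Fh j, Omega F -> is_completion F Fh j ->
    open_normal_base Fh -> Omega Fh }.

Definition agree {K : Type} (n : nat) (x y : nat -> K) : Prop := forall k, k < n -> x k = y k.

Section FreeGroup.
Variables (K : Type) (Omega : TopGroup -> Prop).
Hypothesis HO : admissible Omega.
Variables (F : TopGroup) (i : (nat -> K) -> F).
Hypothesis Hfree : is_free_over_power Omega i.

Let OF : Omega F := proj1 Hfree.
Local Instance free_topgroup : is_topgroup F := proj1 (adm_topgroup _ HO F OF).
Let unif_i : unif_cont_from_power i := proj1 (proj2 Hfree).

Inductive generated : F -> Prop :=
| gen_i x : generated (i x)
| gen_one : generated gone
| gen_mul a b : generated a -> generated b -> generated (a ** b)
| gen_inv a : generated a -> generated (ginv a).

Inductive near (n : nat) : F -> Prop :=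
| near_i x y : agree n x y -> near n (ginv (i x) ** i y)
| near_one : near n gone
| near_mul a b : near n a -> near n b -> near n (a ** b)
| near_inv a : near n a -> near n (ginv a)
| near_conj g a : near n a -> near n (g ** a ** ginv g).

Lemma generated_subgroup : is_subgroup generated.
Proof. split; [apply gen_one|split; [apply gen_mul|apply gen_inv]]. Qed.

Lemma free_generated z : generated z.
Proof.
  set (S := SubTG F generated generated_subgroup).
  set (i' := fun x => exist generated (i x) (gen_i x) : S).
  assert (Hu : unif_cont_from_power i').
  { intros V [U [[W [HW E]] [Ue UV]]].
    destruct (unif_i W (nbhd_e_open W HW (proj1 (E _) Ue))) as [n Hn]. exists n.
    intros x y Hxy. destruct (Hn x y Hxy) as [H1 H2]. split; apply UV, E; auto. }
  destruct (proj2 (proj2 Hfree) S i' (adm_sub _ HO F generated generated_subgroup OF) Hu)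
    as [[psi [Hpsi [Cpsi Epsi]]] _].
  assert (E : forall z, proj1_sig (psi z) = z).
  { apply (proj2 (proj2 (proj2 Hfree) F i OF unif_i) (fun z => proj1_sig (psi z)) (fun z => z)).
    - intros x y; rewrite Hpsi; reflexivity.
    - intros W HW. apply (Cpsi (fun s => W (proj1_sig s))), sub_open, HW.
    - intros x y; reflexivity.
    - intros W HW; auto.
    - intros x; rewrite Epsi; reflexivity.
    - auto. }
  rewrite <- (E z). apply (proj2_sig (psi z)).
Qed.

Lemma near_subgroup n : is_subgroup (near n).
Proof. split; [apply near_one|split; [apply near_mul|apply near_inv]]. Qed.

Lemma near_decr n x : near (S n) x -> near n x.
Proof.
  induction 1.
  - apply near_i. intros k Hk; apply H; lia.
  - apply near_one.
  - apply near_mul; auto.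
  - apply near_inv; auto.
  - apply near_conj; auto.
Qed.

Lemma near_base (V : F -> Prop) : nbhd_e V -> exists n, forall x, near n x -> V x.
Proof.
  intros HV. destruct (proj2 (adm_topgroup _ HO F OF) V HV) as [W [HW [[W1 [W2 W3]] [NW WV]]]].
  destruct (unif_i W (nbhd_e_open W HW W1)) as [n Hn]. exists n. intros x Hx. apply WV.
  induction Hx; auto. apply (Hn x y H).
Qed.

Lemma near_normal_chain : normal_chain F near.
Proof.
  split; [exact near_subgroup|intros n g x; apply near_conj|exact near_decr|].
  intros x Hx. apply eq1_of_nbhds. intros V HV.
  destruct (near_base V HV) as [n Hn]. auto.
Qed.

(* The identity of [F] is continuous into [ChainTG F near] by the universal property. *)
Lemma near_open n : gopen (near n).
Proof.
  set (C := ChainTG F near).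
  assert (OC : Omega C) by (apply (adm_chain _ HO); auto; exact near_normal_chain).
  assert (Hu : @unif_cont_from_power K C i).
  { intros V HV. destruct (ncb_base _ _ (chain_ncb near near_normal_chain) V HV) as [m Hm].
    exists m. intros x y Hxy.
    destruct (normal_ent_two (G := C) (near m) (i x) (i y)) as [H1 H2];
      [intros g a; apply near_conj|apply near_i; exact Hxy|].
    split; apply Hm; auto. }
  destruct (proj2 (proj2 Hfree) C i OC Hu) as [[phi [Hphi [Cphi Ephi]]] _].
  assert (E : forall z, phi z = z).
  { intros z. induction (free_generated z).
    - apply Ephi.
    - apply (morph1 F C phi _ _ Hphi).
    - rewrite Hphi, IHg1, IHg2; reflexivity.
    - rewrite (morphV F C phi _ _ Hphi), IHg; reflexivity. }
  apply (open_ext _ _ (Cphi _ (ncb_open _ _ (chain_ncb near near_normal_chain) n))).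
  intros z; rewrite E; tauto.
Qed.

Lemma near_ncb : normal_chain_base F near.
Proof.
  split; [exact near_subgroup|intros n g x; apply near_conj|exact near_open
         |exact near_decr|exact near_base].
Qed.

Variable k0 : K.

Definition extend (l : list K) : nat -> K := fun k => nth k l k0.

Definition letter (a : bool * list K) : F :=
  if fst a then i (extend (snd a)) else ginv (i (extend (snd a))).

Fixpoint word (w : list (bool * list K)) : F :=
  match w with nil => gone | a :: w => letter a ** word w end.

Lemma word_app w1 w2 : word (w1 ++ w2) = word w1 ** word w2.
Proof. induction w1; simpl; [rewrite mul1g|rewrite IHw1, mulgA]; auto. Qed.

Lemma word_inv w : exists w', word w' = ginv (word w).
Proof.
  induction w as [|a w [w' IH]].
  - exists nil; simpl; rewrite invg1; auto.
  - exists (w' ++ (negb (fst a), snd a) :: nil). rewrite word_app, IH. simpl.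
    rewrite mulg1, invMg. f_equal. unfold letter; simpl.
    destruct (fst a); simpl; [|rewrite invgK]; auto.
Qed.

Lemma agree_extend n (x : nat -> K) : agree n x (extend (map x (seq 0 n))).
Proof.
  intros k Hk. unfold extend. rewrite (nth_indep _ k0 (x 0)).
  - rewrite map_nth, seq_nth; auto.
  - rewrite length_map, length_seq; auto.
Qed.

Lemma words_dense n z : exists w, near n (ginv z ** word w).
Proof.
  pose proof (near_subgroup n) as [N1 [NM NV]].
  induction (free_generated z) as [x| |a b _ [w1 H1] _ [w2 H2]|a _ [w H]].
  - exists ((true, map x (seq 0 n)) :: nil). simpl. unfold letter; simpl. rewrite mulg1.
    apply near_i, agree_extend.
  - exists nil; simpl. rewrite invg1, mul1g. apply near_one.
  - exists (w1 ++ w2). rewrite word_app, invMg.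
    replace (ginv b ** ginv a ** (word w1 ** word w2))
      with ((ginv b ** (ginv a ** word w1) ** ginv (ginv b)) ** (ginv b ** word w2)).
    + apply NM; auto. apply near_conj; auto.
    + rewrite invgK, !mulgA, mulgK; auto.
  - destruct (word_inv w) as [w' Hw']. exists w'. rewrite Hw', invgK.
    replace (a ** ginv (word w)) with (ginv (a ** (ginv a ** word w) ** ginv a)).
    + apply NV, near_conj; auto.
    + rewrite mulKVg, invMg, invgK; auto.
Qed.
End FreeGroup.

(** * Completions *)

Section Completion.
Context {F : TopGroup} {HTF : is_topgroup F}.
Variables (Fh : TopGroup) (j : F -> Fh).
Hypothesis Hc : is_completion F Fh j.

Local Instance completion_topgroup : is_topgroup Fh := proj1 Hc.

Lemma j_mul x y : j (x ** y) = j x ** j y.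
Proof. apply Hc. Qed.
Lemma j_one : j gone = gone.
Proof. exact (morph1 F Fh j _ _ (proj1 (proj2 (proj2 Hc)))). Qed.
Lemma j_inv x : j (ginv x) = ginv (j x).
Proof. exact (morphV F Fh j _ _ (proj1 (proj2 (proj2 Hc))) x). Qed.
Lemma j_cont : continuous_map j.
Proof. apply Hc. Qed.
Lemma j_embedding (U : F -> Prop) : gopen U ->
  exists W : Fh -> Prop, gopen W /\ forall x, U x <-> W (j x).
Proof. apply Hc. Qed.
Lemma j_dense (W : Fh -> Prop) : gopen W -> (exists z, W z) -> exists x, W (j x).
Proof. apply Hc. Qed.

Lemma completion_abelian : abelian F -> abelian Fh.
Proof.
  intros Hab x y. apply NNPP; intros Nxy.
  destruct (hausdorffT _ _ Nxy) as [U [V [HU [HV [Uxy [Vyx D]]]]]].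
  destruct (mul_cont U x y HU Uxy) as [A1 [B1 [HA1 [HB1 [A1x [B1y H1]]]]]].
  destruct (mul_cont V y x HV Vyx) as [B2 [A2 [HB2 [HA2 [B2y [A2x H2]]]]]].
  destruct (j_dense (fun z => A1 z /\ A2 z)) as [f [Af1 Af2]];
    [apply open_and; auto|exists x; auto|].
  destruct (j_dense (fun z => B1 z /\ B2 z)) as [g [Bg1 Bg2]];
    [apply open_and; auto|exists y; auto|].
  apply (D (j f ** j g)); auto. rewrite <- j_mul, Hab, j_mul. auto.
Qed.

Lemma completion_boolean : boolean F -> boolean Fh.
Proof.
  intros Hb x _. apply NNPP; intros Nx.
  destruct (hausdorffT _ _ Nx) as [U [V [HU [HV [Uxx [Ve D]]]]]].
  destruct (mul_cont U x x HU Uxx) as [A [B [HA [HB [Ax [Bx H1]]]]]].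
  destruct (j_dense (fun z => A z /\ B z)) as [f [Af Bf]];
    [apply open_and; auto|exists x; auto|].
  apply (D (j f ** j f)); auto. rewrite <- j_mul, boolean_mulgg, j_one; auto.
Qed.

Variable N : nat -> F -> Prop.
Hypothesis HN : normal_chain_base F N.

Definition closure_chain (n : nat) (z : Fh) : Prop :=
  forall U, gopen U -> U z -> exists x, N n x /\ U (j x).

Lemma closure_chain_subgroup n : is_subgroup (closure_chain n).
Proof.
  destruct (ncb_subgroup _ _ HN n) as [N1 [N2 N3]]. split; [|split].
  - intros U HU Ue. exists gone; rewrite j_one; auto.
  - intros a b Ha Hb U HU Uab.
    destruct (mul_cont U a b HU Uab) as [A [B [HA [HB [Aa [Bb HAB]]]]]].
    destruct (Ha A HA Aa) as [x [Nx Ax]]. destruct (Hb B HB Bb) as [y [Ny By]].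
    exists (x ** y); split; auto. rewrite j_mul; auto.
  - intros a Ha U HU Ua. destruct (Ha _ (open_inv U HU) Ua) as [x [Nx Ux]].
    exists (ginv x); split; auto. rewrite j_inv; auto.
Qed.

Lemma closure_chain_trace n : exists W : Fh -> Prop,
  gopen W /\ (forall x, N n x <-> W (j x)) /\ (forall z, W z -> closure_chain n z).
Proof.
  destruct (j_embedding (N n) (ncb_open _ _ HN n)) as [W [HW E]].
  exists W; repeat split; auto; try apply E.
  intros z Wz U HU Uz. destruct (j_dense (fun y => U y /\ W y)) as [x [Ux Wx]].
  - apply open_and; auto.
  - exists z; auto.
  - exists x; split; auto. apply E; auto.
Qed.

Lemma closure_chain_open n : gopen (closure_chain n).
Proof.
  destruct (closure_chain_trace n) as [W [HW [E WC]]].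
  apply subgroup_open; [apply closure_chain_subgroup|]. exists W; repeat split; auto.
  rewrite <- j_one. apply E, (ncb_one N HN).
Qed.

Lemma closure_chain_j n x : closure_chain n (j x) <-> N n x.
Proof.
  split; [|intros Nx U HU Ux; exists x; auto].
  intros H. destruct (closure_chain_trace n) as [W [HW [E WC]]].
  destruct (H (fun y => W (ginv (j x) ** y))) as [y [Ny Wy]].
  - apply open_transl; auto.
  - rewrite mulVg, <- j_one. apply E, (ncb_one N HN).
  - rewrite <- j_inv, <- j_mul in Wy. apply E in Wy.
    replace x with (y ** ginv (ginv x ** y)) by (rewrite invMg, invgK, mulKVg; auto).
    apply (ncb_subgroup _ _ HN); auto. apply (ncb_subgroup _ _ HN); auto.
Qed.

Lemma closure_chain_normal n : normal (closure_chain n).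
Proof.
  intros g z Hz U HU Uz.
  destruct (mul_cont U (g ** z) (ginv g) HU Uz) as [A [B [HA [HB [Aa [Bb HAB]]]]]].
  destruct (mul_cont A g z HA Aa) as [A1 [A2 [HA1 [HA2 [A1g [A2z HA12]]]]]].
  destruct (j_dense (fun y => A1 y /\ B (ginv y))) as [f [A1f Bf]].
  - apply open_and; auto. apply open_inv; auto.
  - exists g; split; auto.
  - destruct (Hz A2 HA2 A2z) as [x [Nx A2x]].
    exists (f ** x ** ginv f); split; [apply (ncb_normal _ _ HN); auto|].
    rewrite !j_mul, j_inv. apply HAB; auto.
Qed.

Lemma closure_chain_decr n z : closure_chain (S n) z -> closure_chain n z.
Proof.
  intros H U HU Uz. destruct (H U HU Uz) as [x [Nx Ux]].
  exists x; split; auto. apply (ncb_decr _ _ HN); auto.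
Qed.

Lemma closure_chain_base V : nbhd_e V -> exists n, forall z, closure_chain n z -> V z.
Proof.
  intros [O [HO [Oe OV]]].
  assert (Oee : O (gone ** gone)) by (rewrite mul1g; auto).
  destruct (mul_cont O gone gone HO Oee) as [O1 [O2 [HO1 [HO2 [O1e [O2e HO12]]]]]].
  destruct (ncb_base _ _ HN (fun x => O1 (j x))) as [n Hn].
  - exists (fun x => O1 (j x)); split; [apply j_cont; auto|]. rewrite j_one; auto.
  - exists n. intros z Hz. apply OV.
    destruct (Hz (fun y => O2 (ginv (ginv z ** y)))) as [x [Nx Hx]].
    + apply (open_transl (ginv z) (fun y => O2 (ginv y))), open_inv, HO2.
    + rewrite mulVg, invg1; auto.
    + rewrite <- (mulKVg (j x) z), <- (invgK (ginv (j x) ** z)), invMg, invgK.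
      apply HO12; auto.
Qed.

Lemma closure_ncb : normal_chain_base Fh closure_chain.
Proof.
  split; [exact closure_chain_subgroup|exact closure_chain_normal|exact closure_chain_open
         |exact closure_chain_decr|exact closure_chain_base].
Qed.

Lemma j_dense_near n (z : Fh) : exists f, closure_chain n (ginv z ** j f).
Proof.
  destruct (j_dense (fun y => closure_chain n (ginv z ** y))) as [f Hf]; eauto.
  - apply (ncb_coset_open _ closure_ncb).
  - exists z. apply (ncb_refl _ closure_ncb).
Qed.

Section Extension.
Context {H : TopGroup} {HTH : is_topgroup H}.
Variable Phi : F -> H.
Hypothesis Hnb : open_normal_base H.
Hypothesis Hcomplete : complete H.
Hypothesis Phom : homomorphism Phi.
Hypothesis Pcont : continuous_map Phi.

Lemma Phi_inv x : Phi (ginv x) = ginv (Phi x).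
Proof. exact (morphV F H Phi _ _ Phom x). Qed.

(* the image under [Phi] of the trace on [F] of the neighbourhood filter of [z] *)
Definition image_filter (z : Fh) (A : H -> Prop) : Prop :=
  exists n, forall f, closure_chain n (ginv z ** j f) -> A (Phi f).

Lemma Phi_base (W : H -> Prop) : gopen W -> is_subgroup W ->
  exists n, forall g, N n g -> W (Phi g).
Proof.
  intros Wo WS. apply (ncb_base _ _ HN (fun g => W (Phi g))).
  exists (fun g => W (Phi g)). split; [apply Pcont; auto|].
  rewrite (morph1 F H Phi _ _ Phom). split; [apply WS|auto].
Qed.

Lemma image_filter_converges z : exists L, filter_converges (image_filter z) L.
Proof.
  apply Hcomplete.
  - split; [exists 0; auto|split; [|split]].
    + intros [n Hn]. destruct (j_dense_near n z) as [f Hf]. apply (Hn f Hf).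
    + intros A B [n1 H1] [n2 H2]. exists (max n1 n2). intros f Hf.
      split; [apply H1|apply H2]; apply (ncb_le _ closure_ncb _ (max n1 n2)); auto; lia.
    + intros A B AB [n Hn]. exists n; auto.
  - intros V HV. destruct (Hnb V HV) as [W [Wo [WS [WN WV]]]].
    destruct (Phi_base W Wo WS) as [n Hn].
    exists (fun h => exists f, closure_chain n (ginv z ** j f) /\ h = Phi f).
    split; [exists n; intros f Hf; exists f; auto|].
    intros a b [f [Hf ->]] [g [Hg ->]].
    assert (E : W (ginv (Phi f) ** Phi g)).
    { rewrite <- Phi_inv, <- Phom. apply Hn, closure_chain_j. rewrite j_mul, j_inv.
      apply (ncb_trans _ closure_ncb n _ z); auto. apply (ncb_sym _ closure_ncb); auto. }
    destruct (normal_ent_two W _ _ WN E) as [El Er]. split; [apply WV, El|apply WV, Er].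
Qed.

Definition extension (z : Fh) : H := choose gone (filter_converges (image_filter z)).

Lemma extension_near z (W : H -> Prop) : gopen W -> is_subgroup W ->
  exists n, forall f, closure_chain n (ginv z ** j f) -> W (ginv (extension z) ** Phi f).
Proof.
  intros Wo WS. pose proof (chooseP gone _ (image_filter_converges z)) as HL.
  apply (HL (fun y => W (ginv (extension z) ** y))).
  - apply open_transl; auto.
  - rewrite mulVg; apply WS.
Qed.

Lemma extension_j x : extension (j x) = Phi x.
Proof.
  apply eq_of_open_normal_base; auto. intros W Wo WS WN.
  destruct (extension_near (j x) W Wo WS) as [n Hn]. apply Hn, (ncb_refl _ closure_ncb).
Qed.

Lemma extension_hom : homomorphism extension.
Proof.
  intros z w. symmetry. apply eq_of_open_normal_base; auto. intros W Wo WS WN.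
  destruct (extension_near z W Wo WS) as [n1 H1].
  destruct (extension_near w W Wo WS) as [n2 H2].
  destruct (extension_near (z ** w) W Wo WS) as [n3 H3].
  set (n := max n1 (max n2 n3)).
  destruct (j_dense_near n z) as [f Hf]. destruct (j_dense_near n w) as [g Hg].
  assert (Hfg : closure_chain n (ginv (z ** w) ** j (f ** g))).
  { rewrite j_mul. apply normal_near_mul; auto; apply closure_ncb. }
  assert (A1 : W (ginv (extension z) ** Phi f))
    by (apply H1, (ncb_le _ closure_ncb n1 n); [lia|auto]).
  assert (A2 : W (ginv (extension w) ** Phi g))
    by (apply H2, (ncb_le _ closure_ncb n2 n); [lia|auto]).
  assert (A3 : W (ginv (extension (z ** w)) ** Phi (f ** g)))
    by (apply H3, (ncb_le _ closure_ncb n3 n); [lia|auto]).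
  rewrite Phom in A3.
  apply (subgroup_trans W _ (Phi f ** Phi g)); auto.
  - apply normal_near_mul; auto.
  - apply subgroup_sym; auto.
Qed.

Lemma extension_cont : continuous_map extension.
Proof.
  intros U HU. apply open_of_local. intros z Uz.
  destruct (Hnb _ (nbhd_e_transl (extension z) U HU Uz)) as [W [Wo [WS [WN WU]]]].
  destruct (extension_near z W Wo WS) as [n Hn].
  exists (fun y => closure_chain n (ginv z ** y)).
  split; [apply (ncb_coset_open _ closure_ncb)|split; [apply (ncb_refl _ closure_ncb)|]].
  intros z' Hz'. destruct (extension_near z' W Wo WS) as [n' Hn'].
  destruct (j_dense_near (max n n') z') as [f Hf].
  assert (A1 : W (ginv (extension z) ** Phi f)).
  { apply Hn, (ncb_trans _ closure_ncb n _ z'); auto.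
    apply (ncb_le _ closure_ncb n (max n n')); [lia|auto]. }
  assert (A2 : W (ginv (extension z') ** Phi f))
    by (apply Hn', (ncb_le _ closure_ncb n' (max n n')); [lia|auto]).
  rewrite <- (mulKVg (extension z) (extension z')). apply WU.
  apply (subgroup_trans W _ (Phi f)); auto. apply subgroup_sym; auto.
Qed.

Lemma extension_open (V : nat -> H -> Prop) : (forall n, gopen (V n)) -> (forall n, V n gone) ->
  (forall n v, V n v -> exists g, N n g /\ Phi g = v) -> open_map extension.
Proof.
  intros Vo V1 HV U HU. apply open_of_local. intros y [z [Uz <-]].
  destruct (ncb_nbhd _ closure_ncb U z HU Uz) as [n Hn].
  exists (fun h => V n (ginv (extension z) ** h)). split; [apply open_transl; auto|split].
  - rewrite mulVg. apply V1.
  - intros h Hh. destruct (HV n _ Hh) as [g [Ng Pg]]. exists (z ** j g). split.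
    + apply Hn. rewrite mulKg. apply closure_chain_j; auto.
    + rewrite extension_hom, extension_j, Pg, mulKVg; auto.
Qed.
End Extension.
End Completion.

(** * Metrizable complete targets of weight at most K *)

Section Target.
Context {H : TopGroup} {HTH : is_topgroup H}.
Hypothesis Hnb : open_normal_base H.

Lemma ncb_of_metrizable : metrizable H ->
  exists V : nat -> H -> Prop, normal_chain_base H V /\ forall x, V 0 x.
Proof.
  intros [d [d0 [d1 [d2 [d3 dopen]]]]].
  set (ball := fun n y => (d gone y < / (INR n + 1))%R).
  assert (ballo : forall n, gopen (ball n)).
  { intros n. apply dopen. intros y Hy. exists (/ (INR n + 1) - d gone y)%R.
    split; [unfold ball in Hy; lra|]. intros z Hz. unfold ball. pose proof (d3 gone y z). lra. }
  assert (balle : forall n, ball n gone).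
  { intros n. unfold ball. rewrite (proj2 (d1 gone gone) eq_refl).
    apply Rinv_0_lt_compat, INR_succ_pos. }
  assert (HW : forall n, exists W,
             gopen W /\ is_subgroup W /\ normal W /\ forall x, W x -> ball n x).
  { intros n. apply Hnb, nbhd_e_open; auto. }
  set (W := fun n => proj1_sig (constructive_indefinite_description _ (HW n))).
  assert (HW' : forall n, gopen (W n) /\ is_subgroup (W n) /\ normal (W n) /\
                          forall x, W n x -> ball n x).
  { intros n; unfold W; destruct constructive_indefinite_description; simpl; auto. }
  set (V := fix V n := match n with 0 => fun _ : H => True | S n => fun x => V n x /\ W n x end).
  exists V. split; [|simpl; auto]. split.
  - induction n as [|n IH]; simpl; [repeat split; auto|].
    destruct IH as [IH1 [IH2 IH3]]. destruct (HW' n) as [_ [[W1 [W2 W3]] _]].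
    split; [split; auto|split].
    + intros x y [] []; split; auto.
    + intros x []; split; auto.
  - induction n as [|n IH]; simpl; [intros g x _; auto|].
    intros g x [Vx Wx]; split; [apply IH|apply (HW' n)]; auto.
  - induction n as [|n IH]; simpl; [apply open_true|]. apply open_and; auto. apply HW'.
  - intros n x [Vx _]; auto.
  - intros U [O [HO [Oe OU]]]. destruct (proj1 (dopen O) HO gone Oe) as [eps [Heps Hb]].
    destruct (archimed_cor1 eps Heps) as [n [Hn Hn0]].
    exists (S n). intros x [_ Wx]. apply OU, Hb.
    pose proof (proj2 (proj2 (proj2 (HW' n))) x Wx) as Hx. unfold ball in Hx.
    pose proof (lt_0_INR n Hn0).
    assert (INR n < INR n + 1)%R as Hlt by lra.
    apply Rinv_lt_contravar in Hlt; [lra|nra].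
Qed.

Variables (K : Type) (k0 : K).
Hypothesis Hcomplete : complete H.
Hypothesis Hweight : weight_le H K.
Variable V : nat -> H -> Prop.
Hypothesis HV : normal_chain_base H V.

Let B : K -> H -> Prop := proj1_sig (constructive_indefinite_description _ Hweight).

Definition digit_value (n : nat) (k : K) : H :=
  match excluded_middle_informative (exists v, V n v /\ B k v) with
  | left h => proj1_sig (constructive_indefinite_description _ h)
  | right _ => gone
  end.

Lemma digit_value_V n k : V n (digit_value n k).
Proof.
  unfold digit_value. destruct excluded_middle_informative as [h|h]; [|apply (ncb_one _ HV)].
  exact (proj1 (proj2_sig (constructive_indefinite_description _ h))).
Qed.

Lemma digit_value_approx n v : V n v -> exists k, V (S n) (ginv v ** digit_value n k).
Proof.
  intros Vv. pose proof (proj2_sig (constructive_indefinite_description _ Hweight)) as [_ Bb].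
  fold B in Bb.
  destruct (Bb (fun y => V (S n) (ginv v ** y)) v) as [k [Bkv Bk]].
  - apply (ncb_coset_open _ HV).
  - apply (ncb_refl _ HV).
  - exists k. unfold digit_value. destruct excluded_middle_informative as [h|h].
    + apply Bk, (proj2_sig (constructive_indefinite_description _ h)).
    + exfalso; apply h; exists v; auto.
Qed.

Fixpoint partial_product (x : nat -> K) (n : nat) : H :=
  match n with 0 => gone | S n => partial_product x n ** digit_value n (x n) end.

Lemma partial_product_tail x n m : n <= m ->
  V n (ginv (partial_product x n) ** partial_product x m).
Proof.
  induction 1; [apply (ncb_refl _ HV)|].
  simpl. rewrite mulgA. apply (ncb_subgroup _ _ HV); auto.
  apply (ncb_le _ HV n m); auto. apply digit_value_V.
Qed.

Lemma partial_product_agree x y n : agree n x y -> partial_product x n = partial_product y n.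
Proof.
  intros Ha. assert (forall k, k <= n -> partial_product x k = partial_product y k); auto.
  induction k; intros Hk; simpl; auto. rewrite IHk, (Ha k); auto; lia.
Qed.

Lemma partial_product_limit x : exists L, forall n, V n (ginv (partial_product x n) ** L).
Proof.
  set (Fl := fun A : H -> Prop => exists m, forall k, m <= k -> A (partial_product x k)).
  assert (PF : proper_filter Fl).
  { split; [exists 0; auto|split; [|split]].
    - intros [m Hm]. apply (Hm m); auto.
    - intros A A' [m1 H1] [m2 H2]. exists (max m1 m2). intros k Hk; split; [apply H1|apply H2]; lia.
    - intros A A' AA' [m Hm]. exists m; auto. }
  assert (CF : cauchy_filter Fl).
  { intros U HU. destruct (ncb_base _ _ HV U HU) as [n Hn].
    exists (fun z => exists k, n <= k /\ z = partial_product x k).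
    split; [exists n; intros k Hk; exists k; auto|].
    intros a b [k [Hk ->]] [l [Hl ->]].
    assert (E : V n (ginv (partial_product x k) ** partial_product x l)).
    { apply (ncb_trans _ HV n _ (partial_product x n));
        [apply (ncb_sym _ HV)|]; apply partial_product_tail; auto. }
    destruct (normal_ent_two (V n) _ _ (ncb_normal _ _ HV n) E) as [El Er].
    split; apply Hn; auto. }
  destruct (Hcomplete Fl PF CF) as [L HL]. exists L. intros n.
  destruct (HL (fun y => V n (ginv L ** y))) as [m Hm];
    [apply (ncb_coset_open _ HV)|apply (ncb_refl _ HV)|].
  apply (ncb_trans _ HV n _ (partial_product x (max m n))).
  - apply partial_product_tail; lia.
  - apply (ncb_sym _ HV), Hm; lia.
Qed.

Definition code (x : nat -> K) : H :=
  choose gone (fun L => forall n, V n (ginv (partial_product x n) ** L)).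

Lemma code_near x n : V n (ginv (partial_product x n) ** code x).
Proof.
  revert n. apply (chooseP gone (fun L => forall n, V n (ginv (partial_product x n) ** L))).
  apply partial_product_limit.
Qed.

Lemma code_uniq x L : (forall n, V n (ginv (partial_product x n) ** L)) -> code x = L.
Proof.
  intros HL. apply (ncb_eq _ HV). intros n.
  apply (ncb_trans _ HV n _ (partial_product x n)); auto.
  apply (ncb_sym _ HV), code_near.
Qed.

Lemma code_unif : unif_cont_from_power code.
Proof.
  intros U HU. destruct (ncb_base _ _ HV U HU) as [n Hn]. exists n. intros x y Hxy.
  assert (E : V n (ginv (code x) ** code y)).
  { apply (ncb_trans _ HV n _ (partial_product x n)); [apply (ncb_sym _ HV), code_near|].
    rewrite (partial_product_agree x y n Hxy). apply code_near. }
  destruct (normal_ent_two (V n) _ _ (ncb_normal _ _ HV n) E) as [El Er].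
  split; apply Hn; auto.
Qed.

Definition digit (m : nat) (r : H) : K :=
  choose k0 (fun k => V (S m) (ginv r ** digit_value m k)).

Lemma digitP m r : V m r -> V (S m) (ginv r ** digit_value m (digit m r)).
Proof.
  intros Vr. apply (chooseP k0 (fun k => V (S m) (ginv r ** digit_value m k))).
  apply digit_value_approx, Vr.
Qed.

(* Greedy expansion: the digits after position [n] are chosen so that the
   remainders [rest t] shrink into [V (n + t)]. *)
Lemma code_realize n x w : V n w ->
  exists y, agree n x y /\ code y = partial_product x n ** w.
Proof.
  intros Vw.
  set (rest := fix rest t := match t with
               | 0 => w
               | S t => ginv (digit_value (n + t) (digit (n + t) (rest t))) ** rest t end).
  set (y := fun k => if Nat.ltb k n then x k else digit k (rest (k - n))).
  assert (Ha : agree n x y).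
  { intros k Hk. unfold y. destruct (Nat.ltb_spec k n); auto; lia. }
  assert (yt : forall t, y (n + t) = digit (n + t) (rest t)).
  { intros t. unfold y. destruct (Nat.ltb_spec (n + t) n); [lia|].
    do 2 f_equal. lia. }
  assert (Inv : forall t, V (n + t) (rest t) /\
                          partial_product y (n + t) ** rest t = partial_product x n ** w).
  { induction t as [|t [IH1 IH2]].
    - rewrite PeanoNat.Nat.add_0_r, (partial_product_agree x y n Ha). auto.
    - rewrite PeanoNat.Nat.add_succ_r. simpl. rewrite yt. split.
      + apply (ncb_sym _ HV), digitP; auto.
      + rewrite <- IH2, <- mulgA, mulKVg. auto. }
  exists y; split; auto. apply code_uniq. intros k.
  destruct (PeanoNat.Nat.le_gt_cases n k) as [h|h].
  - replace k with (n + (k - n)) by lia. destruct (Inv (k - n)) as [I1 I2].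
    rewrite <- I2, mulKg; auto.
  - rewrite (partial_product_agree x y n Ha), mulgA.
    apply (ncb_subgroup _ _ HV); [apply partial_product_tail; lia|].
    apply (ncb_le _ HV k n); [lia|auto].
Qed.

Lemma code_surj : (forall x, V 0 x) -> forall h, exists x, code x = h.
Proof.
  intros V0 h. destruct (code_realize 0 (fun _ => k0) h (V0 h)) as [y [_ E]].
  exists y. rewrite E; apply mul1g.
Qed.

Lemma code_diff n v : V n v -> exists x y, agree n x y /\ ginv (code x) ** code y = v.
Proof.
  intros Vv. set (x := fun _ : nat => k0).
  destruct (code_realize n x (ginv (partial_product x n) ** code x ** v)) as [y [Ha E]].
  - apply (ncb_subgroup _ _ HV); auto. apply code_near.
  - exists x, y; split; auto. rewrite E, !mulgA, mulgK, mulVg, mul1g; auto.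
Qed.
End Target.

(** * Surjective universality *)

Section Universality.
Variables (K : Type) (Omega : TopGroup -> Prop).
Hypothesis HK : infinite_type K.
Hypothesis HO : admissible Omega.
Variables (F : TopGroup) (i : (nat -> K) -> F) (Fh : TopGroup) (j : F -> Fh).
Hypothesis Hfree : is_free_over_power Omega i.
Hypothesis Hc : is_completion F Fh j.

Let OF : Omega F := proj1 Hfree.
Local Instance free_is_topgroup : is_topgroup F := proj1 (adm_topgroup _ HO F OF).
Local Instance completion_is_topgroup : is_topgroup Fh := proj1 Hc.

Let Nh : nat -> Fh -> Prop := closure_chain Fh j (near K F i).
Let HNh : normal_chain_base Fh Nh := closure_ncb Fh j Hc _ (near_ncb K Omega HO F i Hfree).

Lemma completion_weight : weight_le Fh K.
Proof.
  destruct (infinite_inhabited K HK) as [k0].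
  destruct (index_surjection K HK) as [s Hs].
  apply (weight_le_of_ncb Nh K _ (fun w => j (word K F i k0 w)) s HNh Hs).
  intros n z. destruct (j_dense_near Fh j Hc _ (near_ncb K Omega HO F i Hfree) n z) as [f Hf].
  destruct (words_dense K Omega HO F i Hfree k0 n f) as [w Hw].
  exists w. apply (ncb_trans _ HNh n _ (j f)); auto.
  rewrite <- j_inv, <- j_mul by exact Hc. apply closure_chain_j; auto.
  apply (near_ncb K Omega HO F i Hfree).
Qed.

Lemma completion_in_class : Omega Fh /\ metr_complete_weight K Fh.
Proof.
  split; [apply (adm_completion _ HO F Fh j OF Hc), (open_normal_base_of_ncb _ HNh)|].
  split; [exact (metrizable_of_ncb _ HNh)|split; [apply Hc|exact completion_weight]].
Qed.

Lemma completion_onto (H : TopGroup) : Omega H -> metr_complete_weight K H -> quotient_of Fh H.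
Proof.
  intros OH [Hmet [Hcomplete Hweight]]. destruct (adm_topgroup _ HO H OH) as [HTH Hnb].
  destruct (infinite_inhabited K HK) as [k0].
  destruct (ncb_of_metrizable Hnb Hmet) as [V [HV V0]].
  pose proof (near_ncb K Omega HO F i Hfree) as HN.
  destruct (proj2 (proj2 Hfree) H (code K Hweight V) OH (code_unif K Hcomplete Hweight V HV))
    as [[Phi [Phom [Pcont Pcode]]] _].
  exists (extension Fh j (near K F i) Phi). split; [|split; [|split]].
  - exact (extension_hom Fh j Hc _ HN Phi Hnb Hcomplete Phom Pcont).
  - exact (extension_cont Fh j Hc _ HN Phi Hnb Hcomplete Phom Pcont).
  - apply (extension_open Fh j Hc _ HN Phi Hnb Hcomplete Phom Pcont V);
      [apply HV|apply (ncb_one V HV)|].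
    intros n v Vv. destruct (code_diff K k0 Hcomplete Hweight V HV n v Vv) as [x [y [Ha E]]].
    exists (ginv (i x) ** i y). split; [apply near_i; auto|].
    rewrite Phom, (morphV F H Phi _ _ Phom), !Pcode. exact E.
  - intros h. destruct (code_surj K k0 Hcomplete Hweight V HV V0 h) as [x Hx].
    exists (j (i x)). rewrite (extension_j Fh j Hc _ HN Phi Hnb Hcomplete Phom Pcont), Pcode.
    exact Hx.
Qed.

Theorem admissible_universal :
  surjectively_universal (fun H => Omega H /\ metr_complete_weight K H) Fh.
Proof.
  split; [exact completion_in_class|]. intros H [OH HH]. apply completion_onto; auto.
Qed.
End Universality.

Lemma admissible_NA (Q : TopGroup -> Prop) :
  (forall G, is_topgroup G -> non_archimedean G -> Q G -> open_normal_base G) ->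
  (forall G P SP, is_topgroup G -> open_normal_base G -> Q G -> Q (SubTG G P SP)) ->
  (forall G N, is_topgroup G -> normal_chain G N -> Q G -> Q (ChainTG G N)) ->
  (forall F Fh j, is_topgroup F -> is_completion F Fh j -> open_normal_base Fh ->
     Q F -> Q Fh) ->
  admissible (fun G => is_topgroup G /\ non_archimedean G /\ Q G).
Proof.
  intros Qbase Qsub Qchain Qcompl. split.
  - intros G [HT [HNA HQ]]; auto.
  - intros G P SP [HT [HNA HQ]]. pose proof (Qbase G HT HNA HQ) as Hnb.
    pose proof (sub_topgroup P SP).
    split; [auto|split; [apply non_archimedean_of_base, sub_open_normal_base|]]; auto.
  - intros G N [HT [HNA HQ]] HN. pose proof (chain_topgroup N HN).
    split; [auto|split; [apply non_archimedean_of_base, (open_normal_base_of_ncb (G := ChainTG G N) N),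
                         chain_ncb|]]; auto.
  - intros F Fh j [HT [HNA HQ]] Hc Hnb. pose proof (proj1 Hc).
    split; [auto|split; [apply non_archimedean_of_base|apply (Qcompl F Fh j)]]; auto.
Qed.

Lemma balanced_NA_admissible : admissible balanced_NA.
Proof.
  apply admissible_NA.
  - intros G HT; apply open_normal_base_of_balanced.
  - intros G P SP HT Hnb _. apply (@balanced_of_base _ (sub_topgroup P SP)).
    apply sub_open_normal_base, Hnb.
  - intros G N HT HN _. apply (@balanced_of_base _ (chain_topgroup N HN)).
    apply (open_normal_base_of_ncb (G := ChainTG G N) N), chain_ncb, HN.
  - intros F Fh j HT Hc Hnb _. apply (@balanced_of_base _ (proj1 Hc)), Hnb.
Qed.

Lemma abelian_NA_admissible : admissible abelian_NA.
Proof.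
  apply admissible_NA.
  - intros G HT; apply open_normal_base_of_abelian.
  - intros G P SP HT _; apply sub_abelian.
  - intros G N HT _ Hab; exact Hab.
  - intros F Fh j HT Hc _; apply (completion_abelian Fh j Hc).
Qed.

Lemma boolean_NA_admissible : admissible boolean_NA.
Proof.
  apply admissible_NA.
  - intros G HT HNA Hb; apply open_normal_base_of_abelian, boolean_abelian; auto.
  - intros G P SP HT _; apply sub_boolean.
  - intros G N HT _ Hb; exact Hb.
  - intros F Fh j HT Hc _; apply (completion_boolean Fh j Hc).
Qed.

Theorem theorem6p4 (K : Type) (HK : infinite_type K) :
  (forall (F : TopGroup) (i : (nat -> K) -> F) (Fh : TopGroup) (j : F -> Fh),
     is_free_over_power balanced_NA i -> is_completion F Fh j ->
     surjectively_universal
       (fun H => balanced_NA H /\ metr_complete_weight K H) Fh) /\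
  (forall (F : TopGroup) (i : (nat -> K) -> F) (Fh : TopGroup) (j : F -> Fh),
     is_free_over_power abelian_NA i -> is_completion F Fh j ->
     surjectively_universal
       (fun H => abelian_NA H /\ metr_complete_weight K H) Fh) /\
  (forall (F : TopGroup) (i : (nat -> K) -> F) (Fh : TopGroup) (j : F -> Fh),
     is_free_over_power boolean_NA i -> is_completion F Fh j ->
     surjectively_universal
       (fun H => boolean_NA H /\ metr_complete_weight K H) Fh).
Proof.
  split; [|split]; intros F i Fh j Hfree Hc.
  - exact (admissible_universal K _ HK balanced_NA_admissible F i Fh j Hfree Hc).
  - exact (admissible_universal K _ HK abelian_NA_admissible F i Fh j Hfree Hc).
  - exact (admissible_universal K _ HK boolean_NA_admissible F i Fh j Hfree Hc).
Qed.
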